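(* Let $\lambda,\mu>0$, assume the grid is regular with constant $C_0$, and suppose the exact solution $\boldsymbol u=(u^x,u^y)$, $\underline\sigma=\begin{pmatrix}\sigma^{11}&\sigma^{12}\\\sigma^{12}&\sigma^{22}\end{pmatrix}$ of the elasticity problem is sufficiently smooth. Let $(W^x,W^y,Z^{11},Z^{22},Z^{12})$ be the solution of the MAC-E scheme with data $f^1_{i,j+1/2}=f^x(x_i,y_{j+1/2})$, $f^2_{i+1/2,j}=f^y(x_{i+1/2},y_j)$. Then, for $h$ and $l$ sufficiently small, there is a constant $C>0$ independent of $h$ and $l$ such that $$\|W^x-\tilde u^x\|_{TM}+\|W^y-\tilde u^y\|_{MT}\le C(h^2+l^2)(\|\boldsymbol u\|_{3,\infty}+\|\underline\sigma\|_{3,\infty}),$$ $$\|Z^{12}-\tilde\sigma^{12}\|_T\le C\mu(h^2+l^2)(\|\boldsymbol u\|_{3,\infty}+\|\underline\sigma\|_{3,\infty}),$$ $$\|Z^{11}-\tilde\sigma^{11}\|_M+\|Z^{22}-\tilde\sigma^{22}\|_M\le C(\lambda+\mu)(h^2+l^2)(\|\boldsymbol u\|_{3,\infty}+\|\underline\sigma\|_{3,\infty}).$$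
   Context: Continuous problem on $\Omega=(0,a)\times(0,b)$ with Lamé constants $\lambda,\mu>0$: $\frac1{2\mu}\big(\sigma^{11}-\frac{\lambda}{2\lambda+2\mu}(\sigma^{11}+\sigma^{22})\big)=\partial_xu^x$, $\frac1{2\mu}\big(\sigma^{22}-\frac{\lambda}{2\lambda+2\mu}(\sigma^{11}+\sigma^{22})\big)=\partial_yu^y$, $\sigma^{12}=\mu(\partial_yu^x+\partial_xu^y)$, $\partial_x\sigma^{11}+\partial_y\sigma^{12}=f^x$, $\partial_x\sigma^{12}+\partial_y\sigma^{22}=f^y$ in $\Omega$, $\boldsymbol u=0$ on $\partial\Omega$. Grid: $0=x_0<\dots<x_{n_x}=a$, $0=y_0<\dots<y_{n_y}=b$, $x_{i+1/2}=(x_i+x_{i+1})/2$, $h_{i+1/2}=x_{i+1}-x_i$, $h_i=(h_{i-1/2}+h_{i+1/2})/2$ ($1\le i\le n_x-1$), $h_0=h_{1/2}/2$, $h_{n_x}=h_{n_x-1/2}/2$, $h=\max h_{i+1/2}$; analogously $y_{j+1/2}$, $l_{j+1/2}$, $l_j$, $l_0=l_{1/2}/2$, $l_{n_y}=l_{n_y-1/2}/2$, $l=\max l_{j+1/2}$. Regularity: $\min_{i,j}\{h_{i+1/2},l_{j+1/2}\}\ge C_0\max_{i,j}\{h_{i+1/2},l_{j+1/2}\}$ for a fixed $C_0>0$. Write $\phi_{\alpha,\beta}=\phi(x_\alpha,y_\beta)$. Difference quotients: $[d_x\phi]_{i+1/2,m}=(\phi_{i+1,m}-\phi_{i,m})/h_{i+1/2}$,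 $[d_y\phi]_{k,j+1/2}=(\phi_{k,j+1}-\phi_{k,j})/l_{j+1/2}$, $[D_x\phi]_{i,m}=(\phi_{i+1/2,m}-\phi_{i-1/2,m})/h_i$ ($1\le i\le n_x-1$), $[D_y\phi]_{k,j}=(\phi_{k,j+1/2}-\phi_{k,j-1/2})/l_j$ ($1\le j\le n_y-1$), $[D_x\phi]_{0,m}=(\phi_{1/2,m}-\phi_{0,m})/h_0$, $[D_x\phi]_{n_x,m}=(\phi_{n_x,m}-\phi_{n_x-1/2,m})/h_{n_x}$, $[D_y\phi]_{k,0}=(\phi_{k,1/2}-\phi_{k,0})/l_0$, $[D_y\phi]_{k,n_y}=(\phi_{k,n_y}-\phi_{k,n_y-1/2})/l_{n_y}$. Inner products: $(\phi,\theta)_M=\sum_{i=0}^{n_x-1}\sum_{j=0}^{n_y-1}h_{i+1/2}l_{j+1/2}\phi_{i+1/2,j+1/2}\theta_{i+1/2,j+1/2}$, $(\phi,\theta)_T=\sum_{i=0}^{n_x}\sum_{j=0}^{n_y}h_il_j\phi_{i,j}\theta_{i,j}$, $(\phi,\theta)_{TM}=\sum_{i=1}^{n_x-1}\sum_{j=0}^{n_y-1}h_il_{j+1/2}\phi_{i,j+1/2}\theta_{i,j+1/2}$, $(\phi,\theta)_{MT}=\sum_{i=0}^{n_x-1}\sum_{j=1}^{n_y-1}h_{i+1/2}l_j\phi_{i+1/2,j}\theta_{i+1/2,j}$, $\|\phi\|_\xi^2=(\phi,\phi)_\xi$. MAC-E scheme: find $W^x$ at $(x_i,y_{j+1/2})$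 ($0\le i\le n_x,0\le j\le n_y-1$) and $(x_i,y_0),(x_i,y_{n_y})$; $W^y$ at $(x_{i+1/2},y_j)$ ($0\le i\le n_x-1,0\le j\le n_y$) and $(x_0,y_j),(x_{n_x},y_j)$; $Z^{11},Z^{22}$ at cell centers $(x_{i+1/2},y_{j+1/2})$; $Z^{12}$ at nodes $(x_i,y_j)$; with $W^x,W^y$ vanishing at all their points on $\partial\Omega$ and: $\frac1{2\mu}\big(Z^{11}-\frac{\lambda}{2\lambda+2\mu}(Z^{11}+Z^{22})\big)_{i+1/2,j+1/2}=[d_xW^x]_{i+1/2,j+1/2}$, $\frac1{2\mu}\big(Z^{22}-\frac{\lambda}{2\lambda+2\mu}(Z^{11}+Z^{22})\big)_{i+1/2,j+1/2}=[d_yW^y]_{i+1/2,j+1/2}$ ($0\le i\le n_x-1,0\le j\le n_y-1$); $Z^{12}_{i,j}=\mu([D_yW^x]_{i,j}+[D_xW^y]_{i,j})$ ($0\le i\le n_x,0\le j\le n_y$); $[D_xZ^{11}]_{i,j+1/2}+[d_yZ^{12}]_{i,j+1/2}=f^1_{i,j+1/2}$ ($1\le i\le n_x-1,0\le j\le n_y-1$); $[d_xZ^{12}]_{i+1/2,j}+[D_yZ^{22}]_{i+1/2,j}=f^2_{i+1/2,j}$ ($0\le i\le n_x-1,1\le j\le n_y-1$). Interpolants: $\tilde\sigma^{kk}_{i+1/2,j+1/2}=\big(\sigma^{kk}-\frac{h_{i+1/2}^2}{8}\partial_x^2\sigma^{kk}-\frac{l_{j+1/2}^2}{8}\partial_y^2\sigma^{kk}\big)_{i+1/2,j+1/2}$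 ($k=1,2$), $\tilde\sigma^{12}_{i,j}=\sigma^{12}_{i,j}$, $\tilde u^x_{i,j+1/2}=\big(u^x-\frac{l_{j+1/2}^2}{8}\partial_y^2u^x\big)_{i,j+1/2}$, $\tilde u^y_{i+1/2,j}=\big(u^y-\frac{h_{i+1/2}^2}{8}\partial_x^2u^y\big)_{i+1/2,j}$. $\|\cdot\|_{3,\infty}$ is the $W^{3,\infty}(\Omega)$ norm, taken componentwise-maximal for vector/tensor fields. *)

From Stdlib Require Import Reals Lra List.
Import ListNotations.
From Coquelicot Require Import Coquelicot.
Open Scope R_scope.

Definition pdx (f : R -> R -> R) : R -> R -> R :=
  fun x y => Derive (fun t => f t y) x.
Definition pdy (f : R -> R -> R) : R -> R -> R :=
  fun x y => Derive (fun t => f x t) y.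

(* iterated partial derivative; [true] = d/dx, [false] = d/dy,
   applied from the right end of the list first *)
Fixpoint pd (w : list bool) (f : R -> R -> R) : R -> R -> R :=
  match w with
  | nil => f
  | true :: w' => pdx (pd w' f)
  | false :: w' => pdy (pd w' f)
  end.

(* "sufficiently smooth": all iterated partial derivatives exist and are
   continuous (C^infinity on R^2). *)
Definition smooth2 (f : R -> R -> R) : Prop :=
  forall (w : list bool) (x y : R),
    ex_derive (fun t => pd w f t y) x /\
    ex_derive (fun t => pd w f x t) y /\
    continuous (fun p : R * R => pd w f (fst p) (snd p)) (x, y).

(* M bounds the W^{3,infty}(Omega) seminorms: every partial derivative of
   order <= 3 is bounded by M on Omega = (0,a) x (0,b).  Hence
   ||f||_{3,infty} <= M, and ||f||_{3,infty} is the least such M. *)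
Definition W3inf_bound (a b : R) (f : R -> R -> R) (M : R) : Prop :=
  forall (w : list bool), (List.length w <= 3)%nat ->
    forall x y, 0 < x < a -> 0 < y < b -> Rabs (pd w f x y) <= M.

Fixpoint rsum (n : nat) (f : nat -> R) : R :=
  match n with
  | O => 0
  | S k => rsum k f + f k
  end.

Fixpoint rmax (n : nat) (f : nat -> R) : R :=
  match n with
  | O => 0
  | S k => Rmax (rmax k f) (f k)
  end.

Definition is_grid (n : nat) (x : nat -> R) (a : R) : Prop :=
  x O = 0 /\ x n = a /\ forall i, (i < n)%nat -> x i < x (S i).

(* doubled-index coordinate: xh (2i) = x_i, xh (2i+1) = x_{i+1/2} *)
Definition xh (x : nat -> R) (K : nat) : R :=
  (x (Nat.div K 2) + x (Nat.div (S K) 2)) / 2.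

Definition hh (x : nat -> R) (i : nat) : R := x (S i) - x i.

Definition hn (n : nat) (x : nat -> R) (i : nat) : R :=
  if Nat.eqb i 0 then hh x 0 / 2
  else if Nat.eqb i n then hh x (n - 1) / 2
  else (hh x (i - 1) + hh x i) / 2.

Definition hmax (n : nat) (x : nat -> R) : R := rmax n (hh x).

(* Grid functions are represented on doubled indices:
   phi K M  is the value at (xh K, yh M).  1D difference quotients: *)

Definition dq (x : nat -> R) (phi : nat -> R) (i : nat) : R :=
  (phi (2 * i + 2)%nat - phi (2 * i)%nat) / hh x i.

Definition Dq (n : nat) (x : nat -> R) (phi : nat -> R) (i : nat) : R :=
  if Nat.eqb i 0 then (phi 1%nat - phi 0%nat) / hn n x 0
  else if Nat.eqb i n then (phi (2 * n)%nat - phi (2 * n - 1)%nat) / hn n x n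
  else (phi (2 * i + 1)%nat - phi (2 * i - 1)%nat) / hn n x i.

Definition d_x (x : nat -> R) (phi : nat -> nat -> R) (i M : nat) : R :=
  dq x (fun K => phi K M) i.
Definition d_y (y : nat -> R) (phi : nat -> nat -> R) (K j : nat) : R :=
  dq y (fun M => phi K M) j.
Definition D_x (nx : nat) (x : nat -> R) (phi : nat -> nat -> R) (i M : nat) : R :=
  Dq nx x (fun K => phi K M) i.
Definition D_y (ny : nat) (y : nat -> R) (phi : nat -> nat -> R) (K j : nat) : R :=
  Dq ny y (fun M => phi K M) j.

Definition normM (nx ny : nat) (x y : nat -> R) (phi : nat -> nat -> R) : R :=
  sqrt (rsum nx (fun i => rsum ny (fun j =>
     hh x i * hh y j * (phi (2 * i + 1)%nat (2 * j + 1)%nat) ^ 2))).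

Definition normT (nx ny : nat) (x y : nat -> R) (phi : nat -> nat -> R) : R :=
  sqrt (rsum (S nx) (fun i => rsum (S ny) (fun j =>
     hn nx x i * hn ny y j * (phi (2 * i)%nat (2 * j)%nat) ^ 2))).

(* i = 1 .. nx-1, j = 0 .. ny-1 *)
Definition normTM (nx ny : nat) (x y : nat -> R) (phi : nat -> nat -> R) : R :=
  sqrt (rsum (nx - 1) (fun i' => rsum ny (fun j =>
     hn nx x (S i') * hh y j * (phi (2 * S i')%nat (2 * j + 1)%nat) ^ 2))).

(* i = 0 .. nx-1, j = 1 .. ny-1 *)
Definition normMT (nx ny : nat) (x y : nat -> R) (phi : nat -> nat -> R) : R :=
  sqrt (rsum nx (fun i => rsum (ny - 1) (fun j' =>
     hh x i * hn ny y (S j') * (phi (2 * i + 1)%nat (2 * S j')%nat) ^ 2))).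

Definition elasticity_solution (a b lam mu : R)
  (ux uy s11 s12 s22 fx fy : R -> R -> R) : Prop :=
  (forall X Y, 0 < X < a -> 0 < Y < b ->
     / (2 * mu) * (s11 X Y - lam / (2 * lam + 2 * mu) * (s11 X Y + s22 X Y))
       = pdx ux X Y /\
     / (2 * mu) * (s22 X Y - lam / (2 * lam + 2 * mu) * (s11 X Y + s22 X Y))
       = pdy uy X Y /\
     s12 X Y = mu * (pdy ux X Y + pdx uy X Y) /\
     pdx s11 X Y + pdy s12 X Y = fx X Y /\
     pdx s12 X Y + pdy s22 X Y = fy X Y) /\
  (forall X, 0 <= X <= a ->
     ux X 0 = 0 /\ ux X b = 0 /\ uy X 0 = 0 /\ uy X b = 0) /\
  (forall Y, 0 <= Y <= b ->
     ux 0 Y = 0 /\ ux a Y = 0 /\ uy 0 Y = 0 /\ uy a Y = 0).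

(* ---------- the MAC-E scheme (doubled-index grid functions) ----------
   Wx lives at (2i, 2j+1) and the boundary points (2i,0), (2i,2ny);
   Wy at (2i+1, 2j) and (0,2j), (2nx,2j); Z11, Z22 at (2i+1,2j+1);
   Z12 at (2i,2j). *)
Definition MACE_solution (nx ny : nat) (x y : nat -> R) (lam mu : R)
  (fx fy : R -> R -> R) (Wx Wy Z11 Z22 Z12 : nat -> nat -> R) : Prop :=
  (forall i, (i <= nx)%nat -> Wx (2 * i)%nat 0%nat = 0 /\ Wx (2 * i)%nat (2 * ny)%nat = 0) /\
  (forall j, (j < ny)%nat -> Wx 0%nat (2 * j + 1)%nat = 0 /\ Wx (2 * nx)%nat (2 * j + 1)%nat = 0) /\
  (forall i, (i < nx)%nat -> Wy (2 * i + 1)%nat 0%nat = 0 /\ Wy (2 * i + 1)%nat (2 * ny)%nat = 0) /\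
  (forall j, (j <= ny)%nat -> Wy 0%nat (2 * j)%nat = 0 /\ Wy (2 * nx)%nat (2 * j)%nat = 0) /\
  (forall i j, (i < nx)%nat -> (j < ny)%nat ->
     let z11 := Z11 (2 * i + 1)%nat (2 * j + 1)%nat in
     let z22 := Z22 (2 * i + 1)%nat (2 * j + 1)%nat in
     / (2 * mu) * (z11 - lam / (2 * lam + 2 * mu) * (z11 + z22))
       = d_x x Wx i (2 * j + 1)%nat /\
     / (2 * mu) * (z22 - lam / (2 * lam + 2 * mu) * (z11 + z22))
       = d_y y Wy (2 * i + 1)%nat j) /\
  (forall i j, (i <= nx)%nat -> (j <= ny)%nat ->
     Z12 (2 * i)%nat (2 * j)%nat
       = mu * (D_y ny y Wx (2 * i)%nat j + D_x nx x Wy i (2 * j)%nat)) /\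
  (forall i j, (1 <= i)%nat -> (i <= nx - 1)%nat -> (j < ny)%nat ->
     D_x nx x Z11 i (2 * j + 1)%nat + d_y y Z12 (2 * i)%nat j
       = fx (xh x (2 * i)) (xh y (2 * j + 1))) /\
  (forall i j, (i < nx)%nat -> (1 <= j)%nat -> (j <= ny - 1)%nat ->
     d_x x Z12 i (2 * j)%nat + D_y ny y Z22 (2 * i + 1)%nat j
       = fy (xh x (2 * i + 1)) (xh y (2 * j))).

Definition tsig_kk (x y : nat -> R) (s : R -> R -> R) (K M : nat) : R :=
  let X := xh x K in let Y := xh y M in
  s X Y - (hh x (Nat.div K 2)) ^ 2 / 8 * pdx (pdx s) X Y
        - (hh y (Nat.div M 2)) ^ 2 / 8 * pdy (pdy s) X Y.
Definition tsig12 (x y : nat -> R) (s : R -> R -> R) (K M : nat) : R :=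
  s (xh x K) (xh y M).
Definition tux (x y : nat -> R) (u : R -> R -> R) (K M : nat) : R :=
  let X := xh x K in let Y := xh y M in
  u X Y - (hh y (Nat.div M 2)) ^ 2 / 8 * pdy (pdy u) X Y.
Definition tuy (x y : nat -> R) (u : R -> R -> R) (K M : nat) : R :=
  let X := xh x K in let Y := xh y M in
  u X Y - (hh x (Nat.div K 2)) ^ 2 / 8 * pdx (pdx u) X Y.

(** Let [ex, ey, z11, z22, z12] be the differences between the MAC-E solution and
    the modified interpolants [tux, tuy, tsig_kk, tsig12].  The interpolants satisfy
    the scheme up to residuals of size [(h^2 + l^2)(|u|_{3,oo} + |sigma|_{3,oo})]:
    by Taylor expansion, the [h^2/8] second-derivative corrections make the
    difference quotients on the staggered nonuniform grid second-order accurate.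
    Testing the error equations with the errors themselves and summing by parts
    gives an energy identity; coercivity of the compliance tensor, Young's
    inequality and a discrete Poincare inequality for the displacement errors then
    bound all error norms by a constant (depending on [a, b, lam, mu]) times the
    residuals. *)

From Pilot Require Import Defs.
From Stdlib Require Import Reals.
From Coquelicot Require Import Coquelicot.
Open Scope R_scope.
From Stdlib Require Import Lra Lia Arith List.
(* [Reals] shadows the difference quotients [D_x], [D_y] of [Defs]. *)
From Pilot Require Import Defs.

(** * Finite sums *)

Lemma rsum_ext n f g : (forall k, (k < n)%nat -> f k = g k) -> rsum n f = rsum n g.
Proof. induction n; simpl; intros H; auto. rewrite IHn, H; auto. Qed.

Lemma rsum_plus n f g : rsum n (fun k => f k + g k) = rsum n f + rsum n g.
Proof. induction n; simpl; [lra|]. rewrite IHn; lra. Qed.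

Lemma rsum_scal n c f : rsum n (fun k => c * f k) = c * rsum n f.
Proof. induction n; simpl; [lra|]. rewrite IHn; lra. Qed.

Lemma rsum_opp n f : rsum n (fun k => - f k) = - rsum n f.
Proof. rewrite (rsum_ext _ _ (fun k => -1 * f k)) by (intros; ring). rewrite rsum_scal. ring. Qed.

Lemma rsum_0 n : rsum n (fun _ => 0) = 0.
Proof. induction n; simpl; auto. rewrite IHn; ring. Qed.

Lemma rsum_le n f g : (forall k, (k < n)%nat -> f k <= g k) -> rsum n f <= rsum n g.
Proof.
  induction n; simpl; intros H; [lra|].
  pose proof (H n ltac:(lia)). pose proof (IHn ltac:(intros; apply H; lia)). lra.
Qed.

Lemma rsum_nonneg n f : (forall k, (k < n)%nat -> 0 <= f k) -> 0 <= rsum n f.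
Proof. intros H. rewrite <- (rsum_0 n). apply rsum_le; auto. Qed.

Lemma rsum_Sl n f : rsum (S n) f = f O + rsum n (fun k => f (S k)).
Proof. induction n; simpl in *; [lra|]. rewrite IHn. lra. Qed.

Lemma rsum_comm n m (f : nat -> nat -> R) :
  rsum n (fun i => rsum m (fun j => f i j)) = rsum m (fun j => rsum n (fun i => f i j)).
Proof.
  induction n; simpl.
  - symmetry. apply rsum_0.
  - rewrite IHn, <- rsum_plus. reflexivity.
Qed.

Lemma rsum_telescope n g : rsum n (fun k => g (S k) - g k) = g n - g O.
Proof. induction n; simpl; [lra|]. rewrite IHn; lra. Qed.

Lemma rsum_le_prefix m n f : (m <= n)%nat -> (forall k, (k < n)%nat -> 0 <= f k) ->
  rsum m f <= rsum n f.
Proof.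
  induction 1; intros Hf; [lra|]. simpl.
  pose proof (Hf m0 ltac:(lia)). pose proof (IHle ltac:(intros; apply Hf; lia)). lra.
Qed.

Lemma rsum_split_ends n g : (1 <= n)%nat ->
  rsum (S n) g = g O + rsum (n - 1) (fun i => g (S i)) + g n.
Proof.
  intros H. destruct n; [lia|]. rewrite rsum_Sl. simpl rsum at 1.
  replace (S n - 1)%nat with n by lia. destruct n; simpl; lra.
Qed.

Lemma rsum_abel m (z E : nat -> R) :
  rsum (S m) (fun j => z j * (E (S j) - E j)) + rsum m (fun k => E (S k) * (z (S k) - z k))
  = z m * E (S m) - z O * E O.
Proof. induction m; [simpl; lra|]. cbn [rsum] in *. lra. Qed.

Lemma rsum_cauchy_schwarz n (w q : nat -> R) :
  (forall k, (k < n)%nat -> 0 <= w k) ->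
  (rsum n (fun k => w k * q k)) ^ 2 <= rsum n w * rsum n (fun k => w k * q k ^ 2).
Proof.
  induction n; intros Hw; cbn [rsum]; [lra|].
  pose proof (IHn ltac:(intros; apply Hw; lia)) as IH.
  pose proof (Hw n ltac:(lia)) as wn.
  set (e := rsum n (fun k => w k * q k)) in *.
  set (W := rsum n w) in *. set (S0 := rsum n (fun k => w k * q k ^ 2)) in *.
  assert (HW : 0 <= W) by (apply rsum_nonneg; intros; apply Hw; lia).
  assert (HS : 0 <= S0) by (apply rsum_nonneg; intros; pose proof (Hw k ltac:(lia)); nra).
  assert (Hcross : 2 * e * q n <= W * q n ^ 2 + S0).
  { destruct (Rle_or_lt (2 * e * q n) 0); [nra|].
    assert (e ^ 2 * q n ^ 2 <= W * S0 * q n ^ 2) by (apply Rmult_le_compat_r; [nra|lra]).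
    assert ((2 * e * q n) ^ 2 <= (W * q n ^ 2 + S0) ^ 2).
    { assert (0 <= (W * q n ^ 2 - S0) ^ 2) by apply pow2_ge_0.
      assert ((W * q n ^ 2 + S0) ^ 2 - (2 * e * q n) ^ 2
              = (W * q n ^ 2 - S0) ^ 2 + 4 * (W * S0 * q n ^ 2 - e ^ 2 * q n ^ 2)) by ring.
      lra. }
    apply Rsqr_incr_0_var; [rewrite !Rsqr_pow2; lra | nra]. }
  assert (0 <= w n * (W * q n ^ 2 + S0 - 2 * e * q n)) by (apply Rmult_le_pos; lra).
  assert ((W + w n) * (S0 + w n * q n ^ 2) - (e + w n * q n) ^ 2 =
     (W * S0 - e ^ 2) + w n * (W * q n ^ 2 + S0 - 2 * e * q n)) by ring.
  lra.
Qed.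

Lemma rmax_ge n f i : (i < n)%nat -> f i <= rmax n f.
Proof.
  induction n; intros; [lia|]. simpl. destruct (Nat.eq_dec i n).
  - subst. apply Rmax_r.
  - eapply Rle_trans; [apply IHn; lia | apply Rmax_l].
Qed.

(** Weighted double sums: the squared discrete norms are all of this form. *)
Definition wsum2 n m (w1 w2 : nat -> R) (f : nat -> nat -> R) : R :=
  rsum n (fun i => rsum m (fun j => w1 i * w2 j * f i j)).

Section WeightedSums.
Variables (n m : nat) (w1 w2 : nat -> R).

Lemma wsum2_ext f g : (forall i j, (i < n)%nat -> (j < m)%nat -> f i j = g i j) ->
  wsum2 n m w1 w2 f = wsum2 n m w1 w2 g.
Proof. intros H. apply rsum_ext; intros. apply rsum_ext; intros. rewrite H; auto. Qed.

Lemma wsum2_plus f g :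
  wsum2 n m w1 w2 (fun i j => f i j + g i j) = wsum2 n m w1 w2 f + wsum2 n m w1 w2 g.
Proof.
  unfold wsum2. rewrite <- rsum_plus. apply rsum_ext; intros.
  rewrite <- rsum_plus. apply rsum_ext; intros. ring.
Qed.

Lemma wsum2_scal c f : wsum2 n m w1 w2 (fun i j => c * f i j) = c * wsum2 n m w1 w2 f.
Proof.
  unfold wsum2. rewrite <- rsum_scal. apply rsum_ext; intros.
  rewrite <- rsum_scal. apply rsum_ext; intros. ring.
Qed.

Lemma wsum2_const c : wsum2 n m w1 w2 (fun _ _ => c) = c * (rsum n w1 * rsum m w2).
Proof.
  unfold wsum2. rewrite (rsum_ext _ _ (fun i => (c * rsum m w2) * w1 i)).
  - rewrite rsum_scal. ring.
  - intros. rewrite (rsum_ext _ _ (fun j => (c * w1 k) * w2 j)) by (intros; ring).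
    rewrite rsum_scal. ring.
Qed.

Hypotheses (Hw1 : forall i, (i < n)%nat -> 0 <= w1 i) (Hw2 : forall j, (j < m)%nat -> 0 <= w2 j).

Lemma wsum2_le f g : (forall i j, (i < n)%nat -> (j < m)%nat -> f i j <= g i j) ->
  wsum2 n m w1 w2 f <= wsum2 n m w1 w2 g.
Proof.
  intros H. apply rsum_le; intros. apply rsum_le; intros.
  apply Rmult_le_compat_l; auto. apply Rmult_le_pos; auto.
Qed.

Lemma wsum2_nonneg f : (forall i j, (i < n)%nat -> (j < m)%nat -> 0 <= f i j) ->
  0 <= wsum2 n m w1 w2 f.
Proof.
  intros. replace 0 with (wsum2 n m w1 w2 (fun _ _ => 0)) by (rewrite wsum2_const; ring).
  apply wsum2_le; auto.
Qed.

Lemma wsum2_sq_nonneg f : 0 <= wsum2 n m w1 w2 (fun i j => f i j ^ 2).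
Proof. apply wsum2_nonneg. intros; apply pow2_ge_0. Qed.

Lemma wsum2_young f g k rho A B : 0 < k ->
  rsum n w1 <= A -> rsum m w2 <= B ->
  (forall i j, (i < n)%nat -> (j < m)%nat -> Rabs (g i j) <= rho) ->
  wsum2 n m w1 w2 (fun i j => f i j * g i j)
  <= k / 2 * wsum2 n m w1 w2 (fun i j => f i j ^ 2) + rho ^ 2 / (2 * k) * (A * B).
Proof.
  intros Hk HA HB Hg.
  assert (HA0 : 0 <= rsum n w1) by (apply rsum_nonneg; auto).
  assert (HB0 : 0 <= rsum m w2) by (apply rsum_nonneg; auto).
  assert (Hc : 0 <= rho ^ 2 / (2 * k)) by (apply Rdiv_le_0_compat; [apply pow2_ge_0 | lra]).
  eapply Rle_trans.
  - apply (wsum2_le _ (fun i j => k / 2 * f i j ^ 2 + rho ^ 2 / (2 * k))).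
    intros i j Hi Hj. pose proof (Hg i j Hi Hj) as Hgij.
    assert (Hsq : g i j ^ 2 <= rho ^ 2).
    { rewrite <- (pow2_abs (g i j)). apply pow_incr. split; [apply Rabs_pos | lra]. }
    assert (Hdiv : g i j ^ 2 / (2 * k) <= rho ^ 2 / (2 * k))
      by (apply Rmult_le_compat_r; [left; apply Rinv_0_lt_compat|]; lra).
    assert (Hsq' : 0 <= (k * f i j - g i j) ^ 2 / k)
      by (apply Rdiv_le_0_compat; [apply pow2_ge_0 | lra]).
    assert (k / 2 * f i j ^ 2 + g i j ^ 2 / (2 * k) - f i j * g i j
            = (k * f i j - g i j) ^ 2 / k / 2) by (field; lra).
    lra.
  - rewrite wsum2_plus, wsum2_scal, wsum2_const.
    apply Rplus_le_compat_l, Rmult_le_compat_l; [lra|].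
    apply Rmult_le_compat; lra.
Qed.

End WeightedSums.

(** * Staggered grids and summation by parts *)

Lemma div2_double i : Nat.div (2 * i) 2 = i.
Proof. rewrite Nat.mul_comm, Nat.div_mul; lia. Qed.

Lemma div2_double_S i : Nat.div (2 * i + 1) 2 = i.
Proof. rewrite Nat.add_comm, Nat.mul_comm, Nat.div_add by lia. simpl. lia. Qed.

Lemma xh_double x i : xh x (2 * i) = x i.
Proof.
  unfold xh. replace (S (2 * i)) with (2 * i + 1)%nat by lia.
  rewrite div2_double, div2_double_S. lra.
Qed.

Lemma xh_double_S x i : xh x (2 * i + 1) = (x i + x (S i)) / 2.
Proof.
  unfold xh. replace (S (2 * i + 1)) with (2 * S i)%nat by lia.
  rewrite div2_double_S, div2_double. reflexivity.
Qed.

Lemma dq_minus x p q i : dq x (fun K => p K - q K) i = dq x p i - dq x q i.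
Proof. unfold dq, Rdiv. ring. Qed.

Lemma Dq_minus n x p q i : Dq n x (fun K => p K - q K) i = Dq n x p i - Dq n x q i.
Proof. unfold Dq. destruct (Nat.eqb i 0); [|destruct (Nat.eqb i n)]; unfold Rdiv; ring. Qed.

Lemma d_x_minus x p q i M : d_x x (fun K M => p K M - q K M) i M = d_x x p i M - d_x x q i M.
Proof. apply dq_minus. Qed.

Lemma d_y_minus y p q K j : d_y y (fun K M => p K M - q K M) K j = d_y y p K j - d_y y q K j.
Proof. apply dq_minus. Qed.

Lemma D_x_minus n x p q i M : D_x n x (fun K M => p K M - q K M) i M = D_x n x p i M - D_x n x q i M.
Proof. apply Dq_minus. Qed.

Lemma D_y_minus n y p q K j : D_y n y (fun K M => p K M - q K M) K j = D_y n y p K j - D_y n y q K j.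
Proof. apply Dq_minus. Qed.

Section Grid.
Variables (n : nat) (x : nat -> R) (a : R).
Hypotheses (G : is_grid n x a) (Ha : 0 < a).

Lemma grid_size_pos : (1 <= n)%nat.
Proof. destruct G as [G0 [Gn _]]. destruct n; [|lia]. rewrite G0 in Gn. lra. Qed.

Lemma grid_le k m : (k <= m)%nat -> (m <= n)%nat -> x k <= x m.
Proof.
  induction 1; intros; [lra|]. destruct G as [_ [_ Gi]].
  pose proof (Gi m ltac:(lia)). pose proof (IHle ltac:(lia)). lra.
Qed.

Lemma grid_lt k m : (k < m)%nat -> (m <= n)%nat -> x k < x m.
Proof.
  intros. destruct G as [_ [_ Gi]].
  pose proof (Gi k ltac:(lia)). pose proof (grid_le (S k) m ltac:(lia) ltac:(lia)). lra.
Qed.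

Lemma grid_range k : (k <= n)%nat -> 0 <= x k <= a.
Proof.
  intros. destruct G as [G0 [Gn _]]. rewrite <- G0, <- Gn at 1.
  split; apply grid_le; lia.
Qed.

Lemma grid_interior i : (1 <= i)%nat -> (i <= n - 1)%nat -> 0 < x i < a.
Proof.
  intros. destruct G as [G0 [Gn _]]. rewrite <- G0, <- Gn at 1.
  split; apply grid_lt; lia.
Qed.

Lemma midpoint_range k : (k < n)%nat -> 0 < (x k + x (S k)) / 2 < a.
Proof.
  intros. pose proof (grid_range k ltac:(lia)). pose proof (grid_range (S k) ltac:(lia)).
  pose proof (grid_lt k (S k) ltac:(lia) ltac:(lia)). lra.
Qed.

Lemma hh_pos i : (i < n)%nat -> 0 < hh x i.
Proof. intros. unfold hh. pose proof (grid_lt i (S i) ltac:(lia) ltac:(lia)). lra. Qed.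

Lemma hh_le_hmax i : (i < n)%nat -> hh x i <= hmax n x.
Proof. apply rmax_ge. Qed.

Lemma hn_pos i : (i <= n)%nat -> 0 < hn n x i.
Proof.
  intros. pose proof grid_size_pos. unfold hn.
  destruct (Nat.eqb_spec i 0). { pose proof (hh_pos 0 ltac:(lia)). lra. }
  destruct (Nat.eqb_spec i n). { pose proof (hh_pos (n-1) ltac:(lia)). lra. }
  pose proof (hh_pos (i-1) ltac:(lia)). pose proof (hh_pos i ltac:(lia)). lra.
Qed.

Lemma hn_interior i : (1 <= i)%nat -> (i <= n - 1)%nat ->
  hn n x i = (hh x (i - 1) + hh x i) / 2.
Proof.
  intros. unfold hn.
  destruct (Nat.eqb_spec i 0); [lia|]. destruct (Nat.eqb_spec i n); [lia|]. auto.
Qed.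

Lemma sum_hh : rsum n (hh x) = a.
Proof. destruct G as [G0 [Gn _]]. unfold hh. rewrite (rsum_telescope n x). lra. Qed.

Lemma sum_hn_interior :
  rsum (n - 1) (fun i => hn n x (S i)) = a - hh x O / 2 - hh x (n - 1) / 2.
Proof.
  pose proof grid_size_pos. pose proof sum_hh as E.
  replace n with (S (n - 1)) in E at 1 by lia.
  pose proof E as E'. rewrite rsum_Sl in E. simpl in E'.
  rewrite (rsum_ext _ _ (fun i => / 2 * hh x i + / 2 * hh x (S i))).
  - rewrite rsum_plus, !rsum_scal. lra.
  - intros. rewrite hn_interior by lia. replace (S k - 1)%nat with k by lia. lra.
Qed.

Lemma sum_hn : rsum (S n) (hn n x) = a.
Proof.
  pose proof grid_size_pos. rewrite rsum_split_ends, sum_hn_interior by lia.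
  unfold hn. rewrite Nat.eqb_refl. destruct (Nat.eqb_spec n 0); [lia|].
  rewrite Nat.eqb_refl. lra.
Qed.

Lemma sum_hn_interior_le : rsum (n - 1) (fun i => hn n x (S i)) <= a.
Proof.
  rewrite sum_hn_interior. pose proof grid_size_pos.
  pose proof (hh_pos 0 ltac:(lia)). pose proof (hh_pos (n-1) ltac:(lia)). lra.
Qed.

Lemma hh_dq phi i : (i < n)%nat -> hh x i * dq x phi i = phi (2 * S i)%nat - phi (2 * i)%nat.
Proof.
  intros. unfold dq. replace (2 * i + 2)%nat with (2 * S i)%nat by lia.
  pose proof (hh_pos i H). field. lra.
Qed.

Lemma hn_Dq_interior phi i : (1 <= i)%nat -> (i <= n - 1)%nat ->
  hn n x i * Dq n x phi i = phi (2 * i + 1)%nat - phi (2 * i - 1)%nat.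
Proof.
  intros. pose proof (hn_pos i ltac:(lia)). unfold Dq.
  destruct (Nat.eqb_spec i 0); [lia|]. destruct (Nat.eqb_spec i n); [lia|]. field. lra.
Qed.

(** Half-cell values [phi (2k-1)], [k = 1..n], padded with zeros at [k = 0] and
    [k = n+1]; with [phi] vanishing at both ends, [hn * Dq phi] is a forward
    difference of this sequence, boundary rows included. *)
Definition odd_ext (phi : nat -> R) (k : nat) : R :=
  if orb (Nat.eqb k 0) (Nat.eqb k (S n)) then 0 else phi (2 * k - 1)%nat.

Lemma odd_ext_mid phi k : (1 <= k)%nat -> (k <= n)%nat -> odd_ext phi k = phi (2 * k - 1)%nat.
Proof.
  intros. unfold odd_ext.
  destruct (Nat.eqb_spec k 0); [lia|]. destruct (Nat.eqb_spec k (S n)); [lia|]. auto.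
Qed.

Lemma odd_ext_0 phi : odd_ext phi O = 0.
Proof. reflexivity. Qed.

Lemma odd_ext_last phi : odd_ext phi (S n) = 0.
Proof. unfold odd_ext. rewrite Nat.eqb_refl, Bool.orb_true_r. auto. Qed.

Lemma hn_Dq_odd_ext phi j : phi O = 0 -> phi (2 * n)%nat = 0 -> (j <= n)%nat ->
  hn n x j * Dq n x phi j = odd_ext phi (S j) - odd_ext phi j.
Proof.
  intros H0 Hn Hj. pose proof grid_size_pos. pose proof (hn_pos j Hj). unfold Dq.
  destruct (Nat.eqb_spec j 0); [|destruct (Nat.eqb_spec j n)].
  - subst. rewrite odd_ext_0, odd_ext_mid by lia. simpl. rewrite H0. field. lra.
  - subst. rewrite odd_ext_last, odd_ext_mid, Hn by lia. field. lra.
  - rewrite !odd_ext_mid by lia.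
    replace (2 * S j - 1)%nat with (2 * j + 1)%nat by lia. field. lra.
Qed.

Lemma sum_by_parts_dq (phi Z : nat -> R) : phi O = 0 -> phi (2 * n)%nat = 0 ->
  rsum n (fun i => hh x i * Z (2 * i + 1)%nat * dq x phi i)
  = - rsum (n - 1) (fun k => hn n x (S k) * phi (2 * S k)%nat * Dq n x Z (S k)).
Proof.
  intros H0 Hn. pose proof grid_size_pos.
  rewrite (rsum_ext _ _ (fun i => Z (2 * i + 1)%nat * (phi (2 * S i)%nat - phi (2 * i)%nat)))
    by (intros; rewrite <- (hh_dq phi k) by lia; ring).
  rewrite (rsum_ext (n - 1) _
    (fun k => phi (2 * S k)%nat * (Z (2 * S k + 1)%nat - Z (2 * k + 1)%nat))).
  2:{ intros. rewrite Rmult_assoc, (Rmult_comm (phi _)), <- Rmult_assoc.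
      rewrite hn_Dq_interior by lia. replace (2 * S k - 1)%nat with (2 * k + 1)%nat by lia.
      ring. }
  pose proof (rsum_abel (n - 1) (fun i => Z (2 * i + 1)%nat) (fun k => phi (2 * k)%nat)) as Ab.
  cbv beta in Ab. replace (S (n - 1)) with n in Ab by lia.
  replace (2 * 0)%nat with O in Ab by lia. rewrite H0, Hn in Ab. lra.
Qed.

Lemma sum_by_parts_Dq (phi Z : nat -> R) : phi O = 0 -> phi (2 * n)%nat = 0 ->
  rsum (S n) (fun j => hn n x j * Z (2 * j)%nat * Dq n x phi j)
  = - rsum n (fun k => hh x k * phi (2 * k + 1)%nat * dq x Z k).
Proof.
  intros H0 Hn. pose proof grid_size_pos.
  rewrite (rsum_ext _ _ (fun j => Z (2 * j)%nat * (odd_ext phi (S j) - odd_ext phi j)))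
    by (intros; rewrite <- hn_Dq_odd_ext by (auto; lia); ring).
  rewrite (rsum_ext n _ (fun k => odd_ext phi (S k) * (Z (2 * S k)%nat - Z (2 * k)%nat))).
  2:{ intros. rewrite Rmult_assoc, (Rmult_comm (phi _)), <- Rmult_assoc.
      rewrite hh_dq, odd_ext_mid by lia.
      replace (2 * S k - 1)%nat with (2 * k + 1)%nat by lia. ring. }
  pose proof (rsum_abel n (fun i => Z (2 * i)%nat) (odd_ext phi)) as Ab.
  rewrite odd_ext_last, odd_ext_0 in Ab. lra.
Qed.

Lemma Dq_eq0 (phi : nat -> R) j : phi O = 0 -> phi (2 * n)%nat = 0 ->
  (forall k, (k < n)%nat -> phi (2 * k + 1)%nat = 0) -> (j <= n)%nat -> Dq n x phi j = 0.
Proof.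
  intros H0 Hn Hk Hj. pose proof grid_size_pos.
  pose proof (hn_Dq_odd_ext phi j H0 Hn Hj) as E. pose proof (hn_pos j Hj).
  assert (Hodd : forall k, (k <= S n)%nat -> odd_ext phi k = 0).
  { intros k Hk'. unfold odd_ext.
    destruct (orb (Nat.eqb k 0) (Nat.eqb k (S n))) eqn:Ek; auto.
    apply Bool.orb_false_iff in Ek as [E1 E2].
    apply Nat.eqb_neq in E1. apply Nat.eqb_neq in E2.
    replace (2 * k - 1)%nat with (2 * (k - 1) + 1)%nat by lia. apply Hk. lia. }
  rewrite !Hodd, Rminus_0_r in E by lia.
  apply Rmult_integral in E as [E|E]; [lra|auto].
Qed.

Lemma poincare_point (phi : nat -> R) k : phi O = 0 -> (k <= n)%nat ->
  (phi (2 * k)%nat) ^ 2 <= a * rsum n (fun i => hh x i * (dq x phi i) ^ 2).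
Proof.
  intros H0 Hk.
  assert (Hw : forall i, (i < n)%nat -> 0 <= hh x i * dq x phi i ^ 2).
  { intros i Hi. pose proof (hh_pos i Hi). pose proof (pow2_ge_0 (dq x phi i)). nra. }
  assert (E : phi (2 * k)%nat = rsum k (fun i => hh x i * dq x phi i)).
  { rewrite (rsum_ext _ _ (fun i => phi (2 * S i)%nat - phi (2 * i)%nat))
      by (intros; apply hh_dq; lia).
    rewrite (rsum_telescope k (fun i => phi (2 * i)%nat)). simpl. rewrite H0. ring. }
  assert (Hlen : rsum k (hh x) <= a).
  { unfold hh. rewrite (rsum_telescope k x). destruct G as [G0 _]. rewrite G0.
    pose proof (grid_range k Hk). lra. }
  rewrite E. eapply Rle_trans.
  { apply rsum_cauchy_schwarz. intros; left; apply hh_pos; lia. }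
  apply Rmult_le_compat; auto.
  - apply rsum_nonneg. intros; left; apply hh_pos; lia.
  - apply rsum_nonneg. intros; apply Hw; lia.
  - apply rsum_le_prefix; auto.
Qed.

Lemma poincare (phi : nat -> R) : phi O = 0 ->
  rsum (n - 1) (fun k => hn n x (S k) * (phi (2 * S k)%nat) ^ 2)
  <= a * a * rsum n (fun i => hh x i * (dq x phi i) ^ 2).
Proof.
  intros H0. set (E := rsum n (fun i => hh x i * (dq x phi i) ^ 2)).
  assert (HE : 0 <= E).
  { apply rsum_nonneg. intros. pose proof (hh_pos k H).
    pose proof (pow2_ge_0 (dq x phi k)). nra. }
  eapply Rle_trans.
  - apply (rsum_le _ _ (fun k => (a * E) * hn n x (S k))).
    intros. rewrite (Rmult_comm (a * E)). apply Rmult_le_compat_l.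
    + left; apply hn_pos; lia.
    + apply poincare_point; auto; lia.
  - rewrite rsum_scal. replace (a * a * E) with (a * E * a) by ring.
    apply Rmult_le_compat_l; [nra | apply sum_hn_interior_le].
Qed.

End Grid.

(** * The discrete energy estimate *)

Lemma compliance_coercive lam mu Z1 Z2 : 0 < lam -> 0 < mu ->
  / (2 * (lam + mu)) * (Z1 ^ 2 + Z2 ^ 2)
  <= / (2 * mu) * (Z1 - lam / (2 * lam + 2 * mu) * (Z1 + Z2)) * Z1
     + / (2 * mu) * (Z2 - lam / (2 * lam + 2 * mu) * (Z1 + Z2)) * Z2.
Proof.
  intros. set (c := lam / (2 * lam + 2 * mu)).
  assert (Hc : 0 <= c / (2 * mu)) by (unfold c; apply Rdiv_le_0_compat; [apply Rdiv_le_0_compat|]; lra).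
  assert (/ (2 * mu) * (Z1 - c * (Z1 + Z2)) * Z1 + / (2 * mu) * (Z2 - c * (Z1 + Z2)) * Z2
     - / (2 * (lam + mu)) * (Z1 ^ 2 + Z2 ^ 2) = c / (2 * mu) * (Z1 - Z2) ^ 2)
    by (unfold c; field; lra).
  pose proof (pow2_ge_0 (Z1 - Z2)). nra.
Qed.

Lemma compliance_sq_le lam mu Z1 Z2 : 0 < lam -> 0 < mu ->
  (/ (2 * mu) * (Z1 - lam / (2 * lam + 2 * mu) * (Z1 + Z2))) ^ 2 <= (Z1 ^ 2 + Z2 ^ 2) / mu ^ 2.
Proof.
  intros. set (c := lam / (2 * lam + 2 * mu)).
  assert (Hc : 0 <= c <= 1/2).
  { unfold c. split; [apply Rdiv_le_0_compat; lra|].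
    apply Rmult_le_reg_r with (2 * lam + 2 * mu); [lra|].
    unfold Rdiv. rewrite Rmult_assoc, Rinv_l by lra. lra. }
  assert (Hw : (Z1 - c * (Z1 + Z2)) ^ 2 <= 2 * (Z1 ^ 2 + Z2 ^ 2)).
  { assert ((1 - c) ^ 2 <= 1) by nra. assert (c ^ 2 <= 1) by nra.
    pose proof (pow2_ge_0 ((1 - c) * Z1 + c * Z2)). nra. }
  replace ((/ (2 * mu) * (Z1 - c * (Z1 + Z2))) ^ 2)
    with ((Z1 - c * (Z1 + Z2)) ^ 2 / (4 * mu ^ 2)) by (field; lra).
  assert (0 < mu ^ 2) by (apply pow_lt; lra).
  apply Rmult_le_reg_r with (4 * mu ^ 2); [lra|].
  replace ((Z1 - c * (Z1 + Z2)) ^ 2 / (4 * mu ^ 2) * (4 * mu ^ 2))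
    with ((Z1 - c * (Z1 + Z2)) ^ 2) by (field; lra).
  replace ((Z1 ^ 2 + Z2 ^ 2) / mu ^ 2 * (4 * mu ^ 2)) with (4 * (Z1 ^ 2 + Z2 ^ 2)) by (field; lra).
  pose proof (pow2_ge_0 Z1). pose proof (pow2_ge_0 Z2). lra.
Qed.

(** Constants of the energy estimate.  [coercivity_const] is the coercivity
    constant of the compliance tensor, [young_weight] is the weight put on the
    displacement errors in Young's inequality, chosen so that after Poincare
    they are absorbed by a quarter of the coercive term. *)
Definition coercivity_const lam mu := / (2 * (lam + mu)).
Definition poincare_const a b := a * a + b * b.
Definition young_weight a b lam mu :=
  coercivity_const lam mu * mu ^ 2 / (8 * poincare_const a b).
Definition absorbed_const a b lam mu :=
  / coercivity_const lam mu + mu / 2 + / (2 * young_weight a b lam mu)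
  + 2 * young_weight a b lam mu * poincare_const a b.
Definition stress_const a b lam mu :=
  4 * (a * b) * absorbed_const a b lam mu / coercivity_const lam mu.
Definition shear_const a b lam mu := 2 * mu * (a * b) * absorbed_const a b lam mu.
Definition displacement_const a b lam mu :=
  poincare_const a b * (2 * stress_const a b lam mu / mu ^ 2 + 2 * (a * b)).
Definition energy_const a b lam mu :=
  stress_const a b lam mu + shear_const a b lam mu + displacement_const a b lam mu.

Lemma coercivity_const_pos lam mu : 0 < lam -> 0 < mu -> 0 < coercivity_const lam mu.
Proof. intros. unfold coercivity_const. apply Rinv_0_lt_compat. lra. Qed.

Lemma young_weight_pos a b lam mu : 0 < a -> 0 < b -> 0 < lam -> 0 < mu -> 0 < young_weight a b lam mu.
Proof.
  intros. unfold young_weight, poincare_const.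
  pose proof (coercivity_const_pos lam mu). pose proof (pow_lt mu 2).
  apply Rdiv_lt_0_compat; [apply Rmult_lt_0_compat|]; nra.
Qed.

Section Absorb.
Variables (a b lam mu rho P Q X Y : R).
Hypotheses (Ha : 0 < a) (Hb : 0 < b) (Hlam : 0 < lam) (Hmu : 0 < mu).
Hypotheses (HP : 0 <= P) (HQ : 0 <= Q) (HX : 0 <= X) (HY : 0 <= Y).
Hypothesis Hmain :
  coercivity_const lam mu * P + / mu * Q
  <= coercivity_const lam mu / 2 * P + rho ^ 2 / coercivity_const lam mu * (a * b)
     + / (2 * mu) * Q + mu * rho ^ 2 / 2 * (a * b)
     + young_weight a b lam mu * (X + Y) + rho ^ 2 / (2 * young_weight a b lam mu) * (a * b).
Hypothesis HXP : X <= a * a * (2 / mu ^ 2 * P + 2 * rho ^ 2 * (a * b)).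
Hypothesis HYP : Y <= b * b * (2 / mu ^ 2 * P + 2 * rho ^ 2 * (a * b)).

Lemma absorb_stress_shear :
  P <= stress_const a b lam mu * rho ^ 2 /\ Q <= shear_const a b lam mu * rho ^ 2.
Proof.
  pose proof (coercivity_const_pos lam mu Hlam Hmu) as Hk1.
  pose proof (young_weight_pos a b lam mu Ha Hb Hlam Hmu) as Heta.
  set (k1 := coercivity_const lam mu) in *. set (eta := young_weight a b lam mu) in *.
  set (L := poincare_const a b). set (K0 := absorbed_const a b lam mu).
  assert (HL : 0 < L) by (unfold L, poincare_const; nra).
  assert (Hab : 0 < a * b) by nra. pose proof (pow2_ge_0 rho) as Hr2.
  set (U := 2 / mu ^ 2 * P + 2 * rho ^ 2 * (a * b)) in HXP, HYP.
  assert (HXY : eta * (X + Y) <= eta * (L * U)).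
  { apply Rmult_le_compat_l; [lra|]. unfold L, poincare_const.
    replace ((a * a + b * b) * U) with (a * a * U + b * b * U) by ring. lra. }
  assert (Hcancel : eta * L * (2 / mu ^ 2) = k1 / 4)
    by (unfold eta, young_weight; fold k1 L; field; split; lra).
  assert (HLU : eta * (L * U) = k1 / 4 * P + 2 * eta * L * rho ^ 2 * (a * b))
    by (rewrite <- Hcancel; unfold U; ring).
  assert (Hmain' : k1 / 4 * P + / mu * Q / 2 <= (a * b) * rho ^ 2 * K0).
  { unfold K0, absorbed_const. fold k1 eta L.
    replace (/ (2 * mu) * Q) with (/ mu * Q / 2) in Hmain by (field; lra).
    replace (rho ^ 2 / k1 * (a * b)) with (/ k1 * rho ^ 2 * (a * b)) in Hmain by (field; lra).
    replace (rho ^ 2 / (2 * eta) * (a * b)) with (/ (2 * eta) * rho ^ 2 * (a * b)) in Hmain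
      by (field; lra).
    lra. }
  assert (HmQ : 0 <= / mu * Q / 2).
  { assert (0 < / mu) by (apply Rinv_0_lt_compat; lra). nra. }
  split.
  - apply Rmult_le_reg_l with (k1 / 4); [lra|].
    replace (k1 / 4 * (stress_const a b lam mu * rho ^ 2)) with ((a * b) * rho ^ 2 * K0)
      by (unfold stress_const; fold k1 K0; field; lra).
    nra.
  - apply Rmult_le_reg_l with (/ mu / 2); [apply Rdiv_lt_0_compat; [apply Rinv_0_lt_compat|]; lra|].
    replace (/ mu / 2 * (shear_const a b lam mu * rho ^ 2)) with ((a * b) * rho ^ 2 * K0)
      by (unfold shear_const; fold K0; field; lra).
    replace (/ mu / 2 * Q) with (/ mu * Q / 2) by (field; lra). nra.
Qed.

Lemma energy_absorb :
  P <= energy_const a b lam mu * rho ^ 2 /\ Q <= energy_const a b lam mu * rho ^ 2 /\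
  X <= energy_const a b lam mu * rho ^ 2 /\ Y <= energy_const a b lam mu * rho ^ 2.
Proof.
  destruct absorb_stress_shear as [PB QB].
  assert (Hmu2 : 0 < mu ^ 2) by (apply pow_lt; lra).
  pose proof (pow2_ge_0 rho). assert (0 < a * b) by nra.
  assert (KPpos : 0 <= stress_const a b lam mu).
  { pose proof (coercivity_const_pos lam mu Hlam Hmu) as Hk1.
    pose proof (young_weight_pos a b lam mu Ha Hb Hlam Hmu) as Heta.
    assert (0 < poincare_const a b) by (unfold poincare_const; nra).
    assert (0 < / coercivity_const lam mu) by (apply Rinv_0_lt_compat; lra).
    assert (0 < / (2 * young_weight a b lam mu)) by (apply Rinv_0_lt_compat; lra).
    assert (0 <= absorbed_const a b lam mu) by (unfold absorbed_const; nra).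
    unfold stress_const. apply Rdiv_le_0_compat; nra. }
  set (KU := 2 * stress_const a b lam mu / mu ^ 2 + 2 * (a * b)).
  assert (KUpos : 0 <= KU)
    by (unfold KU; assert (0 <= 2 * stress_const a b lam mu / mu ^ 2) by (apply Rdiv_le_0_compat; lra); lra).
  assert (UB : 2 / mu ^ 2 * P + 2 * rho ^ 2 * (a * b) <= KU * rho ^ 2).
  { unfold KU.
    assert (2 / mu ^ 2 * P <= 2 / mu ^ 2 * (stress_const a b lam mu * rho ^ 2))
      by (apply Rmult_le_compat_l; [apply Rdiv_le_0_compat|]; lra).
    replace (2 / mu ^ 2 * (stress_const a b lam mu * rho ^ 2))
      with (2 * stress_const a b lam mu / mu ^ 2 * rho ^ 2) in H0 by (field; lra).
    lra. }
  assert (XB : X <= displacement_const a b lam mu * rho ^ 2 /\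
               Y <= displacement_const a b lam mu * rho ^ 2).
  { unfold displacement_const. fold KU. unfold poincare_const.
    assert (a * a * (2 / mu ^ 2 * P + 2 * rho ^ 2 * (a * b)) <= a * a * (KU * rho ^ 2))
      by (apply Rmult_le_compat_l; nra).
    assert (b * b * (2 / mu ^ 2 * P + 2 * rho ^ 2 * (a * b)) <= b * b * (KU * rho ^ 2))
      by (apply Rmult_le_compat_l; nra).
    split; nra. }
  assert (0 <= shear_const a b lam mu * rho ^ 2) by lra.
  assert (0 <= displacement_const a b lam mu * rho ^ 2) by lra.
  unfold energy_const. repeat split; nra.
Qed.

End Absorb.

Section DiscreteEnergy.
Variables (nx ny : nat) (x y : nat -> R) (a b lam mu : R).
Hypotheses (Gx : is_grid nx x a) (Gy : is_grid ny y b).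
Hypotheses (Ha : 0 < a) (Hb : 0 < b) (Hlam : 0 < lam) (Hmu : 0 < mu).
Variables ex ey z11 z22 z12 r11 r22 r12 r1 r2 : nat -> nat -> R.
Variable rho : R.

Hypothesis Hex_y : forall i, (i <= nx)%nat -> ex (2*i)%nat 0%nat = 0 /\ ex (2*i)%nat (2*ny)%nat = 0.
Hypothesis Hex_x : forall j, (j < ny)%nat -> ex 0%nat (2*j+1)%nat = 0 /\ ex (2*nx)%nat (2*j+1)%nat = 0.
Hypothesis Hey_y : forall i, (i < nx)%nat -> ey (2*i+1)%nat 0%nat = 0 /\ ey (2*i+1)%nat (2*ny)%nat = 0.
Hypothesis Hey_x : forall j, (j <= ny)%nat -> ey 0%nat (2*j)%nat = 0 /\ ey (2*nx)%nat (2*j)%nat = 0.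
Hypothesis Hcomp : forall i j, (i < nx)%nat -> (j < ny)%nat ->
  / (2 * mu) * (z11 (2*i+1)%nat (2*j+1)%nat
     - lam / (2 * lam + 2 * mu) * (z11 (2*i+1)%nat (2*j+1)%nat + z22 (2*i+1)%nat (2*j+1)%nat))
    = d_x x ex i (2*j+1)%nat + r11 (2*i+1)%nat (2*j+1)%nat /\
  / (2 * mu) * (z22 (2*i+1)%nat (2*j+1)%nat
     - lam / (2 * lam + 2 * mu) * (z11 (2*i+1)%nat (2*j+1)%nat + z22 (2*i+1)%nat (2*j+1)%nat))
    = d_y y ey (2*i+1)%nat j + r22 (2*i+1)%nat (2*j+1)%nat.
Hypothesis Hshear : forall i j, (i <= nx)%nat -> (j <= ny)%nat ->
  z12 (2*i)%nat (2*j)%nat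
  = mu * (D_y ny y ex (2*i)%nat j + D_x nx x ey i (2*j)%nat) + r12 (2*i)%nat (2*j)%nat.
Hypothesis Heq_x : forall i j, (1 <= i)%nat -> (i <= nx - 1)%nat -> (j < ny)%nat ->
  D_x nx x z11 i (2 * j + 1)%nat + d_y y z12 (2 * i)%nat j = r1 (2*i)%nat (2*j+1)%nat.
Hypothesis Heq_y : forall i j, (i < nx)%nat -> (1 <= j)%nat -> (j <= ny - 1)%nat ->
  d_x x z12 i (2 * j)%nat + D_y ny y z22 (2 * i + 1)%nat j = r2 (2*i+1)%nat (2*j)%nat.
Hypothesis Br_comp : forall i j, (i < nx)%nat -> (j < ny)%nat ->
  Rabs (r11 (2*i+1)%nat (2*j+1)%nat) <= rho /\ Rabs (r22 (2*i+1)%nat (2*j+1)%nat) <= rho.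
Hypothesis Br_shear : forall i j, (i <= nx)%nat -> (j <= ny)%nat ->
  Rabs (r12 (2*i)%nat (2*j)%nat) <= mu * rho.
Hypothesis Br_eq_x : forall i j, (1 <= i)%nat -> (i <= nx - 1)%nat -> (j < ny)%nat ->
  Rabs (r1 (2*i)%nat (2*j+1)%nat) <= rho.
Hypothesis Br_eq_y : forall i j, (i < nx)%nat -> (1 <= j)%nat -> (j <= ny - 1)%nat ->
  Rabs (r2 (2*i+1)%nat (2*j)%nat) <= rho.

Let SM := wsum2 nx ny (hh x) (hh y).
Let ST := wsum2 (S nx) (S ny) (hn nx x) (hn ny y).
Let STM := wsum2 (nx - 1) ny (fun i => hn nx x (S i)) (hh y).
Let SMT := wsum2 nx (ny - 1) (hh x) (fun j => hn ny y (S j)).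

Let hh_x_ge0 i : (i < nx)%nat -> 0 <= hh x i.
Proof. intros; left; apply (hh_pos nx x a Gx); auto. Qed.
Let hh_y_ge0 j : (j < ny)%nat -> 0 <= hh y j.
Proof. intros; left; apply (hh_pos ny y b Gy); auto. Qed.
Let hn_x_ge0 i : (i < S nx)%nat -> 0 <= hn nx x i.
Proof. intros; left; apply (hn_pos nx x a Gx Ha); lia. Qed.
Let hn_y_ge0 j : (j < S ny)%nat -> 0 <= hn ny y j.
Proof. intros; left; apply (hn_pos ny y b Gy Hb); lia. Qed.
Let hn_x_S_ge0 i : (i < nx - 1)%nat -> 0 <= hn nx x (S i).
Proof. intros; left; apply (hn_pos nx x a Gx Ha); lia. Qed.
Let hn_y_S_ge0 j : (j < ny - 1)%nat -> 0 <= hn ny y (S j).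
Proof. intros; left; apply (hn_pos ny y b Gy Hb); lia. Qed.

Lemma discrete_green_x :
  SM (fun i j => z11 (2*i+1)%nat (2*j+1)%nat * d_x x ex i (2*j+1)%nat)
  + ST (fun i j => z12 (2*i)%nat (2*j)%nat * D_y ny y ex (2*i)%nat j)
  = - STM (fun i j => ex (2 * S i)%nat (2*j+1)%nat * r1 (2 * S i)%nat (2*j+1)%nat).
Proof.
  pose proof (grid_size_pos nx x a Gx Ha) as Hnx. pose proof (grid_size_pos ny y b Gy Hb) as Hny.
  assert (Ia : SM (fun i j => z11 (2*i+1)%nat (2*j+1)%nat * d_x x ex i (2*j+1)%nat)
     = - rsum (nx-1) (fun k => rsum ny (fun j => hn nx x (S k) * hh y j *
          (ex (2 * S k)%nat (2*j+1)%nat * D_x nx x z11 (S k) (2*j+1)%nat)))).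
  { unfold SM, wsum2. rewrite rsum_comm, (rsum_comm (nx-1)), <- rsum_opp.
    apply rsum_ext; intros j Hj.
    transitivity (hh y j * rsum nx (fun i => hh x i * z11 (2*i+1)%nat (2*j+1)%nat
                                              * dq x (fun K => ex K (2*j+1)%nat) i)).
    { rewrite <- rsum_scal. apply rsum_ext; intros; unfold d_x; ring. }
    rewrite (sum_by_parts_dq nx x a Gx Ha (fun K => ex K (2*j+1)%nat) (fun K => z11 K (2*j+1)%nat))
      by (apply Hex_x; auto).
    rewrite <- Ropp_mult_distr_r, <- rsum_scal. f_equal.
    apply rsum_ext; intros. unfold D_x. ring. }
  assert (Ib : ST (fun i j => z12 (2*i)%nat (2*j)%nat * D_y ny y ex (2*i)%nat j)
     = - rsum (nx-1) (fun k => rsum ny (fun j => hn nx x (S k) * hh y j *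
          (ex (2 * S k)%nat (2*j+1)%nat * d_y y z12 (2 * S k)%nat j)))).
  { unfold ST, wsum2. rewrite rsum_split_ends by lia.
    assert (Hz : forall i, (i = 0 \/ i = nx)%nat ->
       rsum (S ny) (fun j => hn nx x i * hn ny y j
                               * (z12 (2*i)%nat (2*j)%nat * D_y ny y ex (2*i)%nat j)) = 0).
    { intros i Hi. rewrite <- (rsum_0 (S ny)). apply rsum_ext; intros j Hj.
      unfold D_y. rewrite (Dq_eq0 ny y b Gy Hb); try ring; try lia; try (apply Hex_y; lia).
      intros k Hk. destruct Hi; subst; apply (Hex_x k Hk). }
    rewrite (Hz 0%nat), (Hz nx) by auto. rewrite <- rsum_opp, Rplus_0_l, Rplus_0_r.
    apply rsum_ext; intros i Hi.
    transitivity (hn nx x (S i) * rsum (S ny) (fun j => hn ny y j * z12 (2 * S i)%nat (2*j)%nat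
                                                 * Dq ny y (fun M => ex (2 * S i)%nat M) j)).
    { rewrite <- rsum_scal. apply rsum_ext; intros; unfold D_y; ring. }
    rewrite (sum_by_parts_Dq ny y b Gy Hb (fun M => ex (2 * S i)%nat M) (fun M => z12 (2 * S i)%nat M))
      by (apply Hex_y; lia).
    rewrite <- Ropp_mult_distr_r, <- rsum_scal. f_equal.
    apply rsum_ext; intros. unfold d_y. ring. }
  rewrite Ia, Ib. unfold STM, wsum2. rewrite <- Ropp_plus_distr, <- rsum_plus. f_equal.
  apply rsum_ext; intros i Hi. rewrite <- rsum_plus. apply rsum_ext; intros j Hj.
  rewrite <- (Heq_x (S i) j) by lia. ring.
Qed.

Lemma discrete_green_y :
  SM (fun i j => z22 (2*i+1)%nat (2*j+1)%nat * d_y y ey (2*i+1)%nat j)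
  + ST (fun i j => z12 (2*i)%nat (2*j)%nat * D_x nx x ey i (2*j)%nat)
  = - SMT (fun i j => ey (2 * i + 1)%nat (2 * S j)%nat * r2 (2 * i + 1)%nat (2 * S j)%nat).
Proof.
  pose proof (grid_size_pos nx x a Gx Ha) as Hnx. pose proof (grid_size_pos ny y b Gy Hb) as Hny.
  assert (Ia : SM (fun i j => z22 (2*i+1)%nat (2*j+1)%nat * d_y y ey (2*i+1)%nat j)
     = - rsum nx (fun i => rsum (ny-1) (fun k => hh x i * hn ny y (S k) *
          (ey (2 * i + 1)%nat (2 * S k)%nat * D_y ny y z22 (2*i+1)%nat (S k))))).
  { unfold SM, wsum2. rewrite <- rsum_opp. apply rsum_ext; intros i Hi.
    transitivity (hh x i * rsum ny (fun j => hh y j * z22 (2*i+1)%nat (2*j+1)%nat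
                                              * dq y (fun M => ey (2*i+1)%nat M) j)).
    { rewrite <- rsum_scal. apply rsum_ext; intros; unfold d_y; ring. }
    rewrite (sum_by_parts_dq ny y b Gy Hb (fun M => ey (2*i+1)%nat M) (fun M => z22 (2*i+1)%nat M))
      by (apply Hey_y; auto).
    rewrite <- Ropp_mult_distr_r, <- rsum_scal. f_equal.
    apply rsum_ext; intros. unfold D_y. ring. }
  assert (Ib : ST (fun i j => z12 (2*i)%nat (2*j)%nat * D_x nx x ey i (2*j)%nat)
     = - rsum nx (fun i => rsum (ny-1) (fun k => hh x i * hn ny y (S k) *
          (ey (2 * i + 1)%nat (2 * S k)%nat * d_x x z12 i (2 * S k)%nat)))).
  { unfold ST, wsum2. rewrite rsum_comm, (rsum_comm nx), rsum_split_ends by lia.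
    assert (Hz : forall j, (j = 0 \/ j = ny)%nat ->
       rsum (S nx) (fun i => hn nx x i * hn ny y j
                               * (z12 (2*i)%nat (2*j)%nat * D_x nx x ey i (2*j)%nat)) = 0).
    { intros j Hj. rewrite <- (rsum_0 (S nx)). apply rsum_ext; intros i Hi.
      unfold D_x. rewrite (Dq_eq0 nx x a Gx Ha); try ring; try lia; try (apply Hey_x; lia).
      intros k Hk. destruct Hj; subst; apply (Hey_y k Hk). }
    rewrite (Hz 0%nat), (Hz ny) by auto. rewrite <- rsum_opp, Rplus_0_l, Rplus_0_r.
    apply rsum_ext; intros j Hj.
    transitivity (hn ny y (S j) * rsum (S nx) (fun i => hn nx x i * z12 (2 * i)%nat (2 * S j)%nat
                                                 * Dq nx x (fun K => ey K (2 * S j)%nat) i)).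
    { rewrite <- rsum_scal. apply rsum_ext; intros; unfold D_x; ring. }
    rewrite (sum_by_parts_Dq nx x a Gx Ha (fun K => ey K (2 * S j)%nat) (fun K => z12 K (2 * S j)%nat))
      by (apply Hey_x; lia).
    rewrite <- Ropp_mult_distr_r, <- rsum_scal. f_equal.
    apply rsum_ext; intros. unfold d_x. ring. }
  rewrite Ia, Ib. unfold SMT, wsum2. rewrite <- Ropp_plus_distr, <- rsum_plus. f_equal.
  apply rsum_ext; intros i Hi. rewrite <- rsum_plus. apply rsum_ext; intros j Hj.
  rewrite <- (Heq_y i (S j)) by lia. ring.
Qed.

Let Z1 i j := z11 (2*i+1)%nat (2*j+1)%nat.
Let Z2 i j := z22 (2*i+1)%nat (2*j+1)%nat.
Let A1 i j := / (2 * mu) * (Z1 i j - lam / (2 * lam + 2 * mu) * (Z1 i j + Z2 i j)).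
Let A2 i j := / (2 * mu) * (Z2 i j - lam / (2 * lam + 2 * mu) * (Z1 i j + Z2 i j)).

Lemma energy_identity :
  SM (fun i j => A1 i j * Z1 i j + A2 i j * Z2 i j)
  + ST (fun i j => / mu * z12 (2*i)%nat (2*j)%nat ^ 2)
  = - STM (fun i j => ex (2 * S i)%nat (2*j+1)%nat * r1 (2 * S i)%nat (2*j+1)%nat)
    - SMT (fun i j => ey (2 * i + 1)%nat (2 * S j)%nat * r2 (2 * i + 1)%nat (2 * S j)%nat)
    + SM (fun i j => Z1 i j * r11 (2*i+1)%nat (2*j+1)%nat + Z2 i j * r22 (2*i+1)%nat (2*j+1)%nat)
    + / mu * ST (fun i j => z12 (2*i)%nat (2*j)%nat * r12 (2*i)%nat (2*j)%nat).
Proof.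
  assert (Estress : SM (fun i j => A1 i j * Z1 i j + A2 i j * Z2 i j) =
    SM (fun i j => z11 (2*i+1)%nat (2*j+1)%nat * d_x x ex i (2*j+1)%nat) +
    SM (fun i j => z22 (2*i+1)%nat (2*j+1)%nat * d_y y ey (2*i+1)%nat j) +
    SM (fun i j => Z1 i j * r11 (2*i+1)%nat (2*j+1)%nat + Z2 i j * r22 (2*i+1)%nat (2*j+1)%nat)).
  { unfold SM. rewrite <- !wsum2_plus. apply wsum2_ext. intros i j Hi Hj.
    destruct (Hcomp i j Hi Hj) as [C1 C2]. unfold A1, A2, Z1, Z2. rewrite C1, C2. ring. }
  assert (Eshear : ST (fun i j => / mu * z12 (2*i)%nat (2*j)%nat ^ 2) =
    ST (fun i j => z12 (2*i)%nat (2*j)%nat * D_y ny y ex (2*i)%nat j) +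
    ST (fun i j => z12 (2*i)%nat (2*j)%nat * D_x nx x ey i (2*j)%nat) +
    / mu * ST (fun i j => z12 (2*i)%nat (2*j)%nat * r12 (2*i)%nat (2*j)%nat)).
  { unfold ST. rewrite <- wsum2_scal, <- !wsum2_plus. apply wsum2_ext. intros i j Hi Hj.
    replace (/ mu * z12 (2*i)%nat (2*j)%nat ^ 2)
      with (/ mu * z12 (2*i)%nat (2*j)%nat * z12 (2*i)%nat (2*j)%nat) by ring.
    rewrite Hshear at 2 by lia. field. lra. }
  pose proof discrete_green_x. pose proof discrete_green_y. lra.
Qed.

Lemma displacement_x_poincare :
  STM (fun i j => ex (2 * S i)%nat (2*j+1)%nat ^ 2)
  <= a * a * SM (fun i j => d_x x ex i (2*j+1)%nat ^ 2).
Proof.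
  unfold STM, SM, wsum2. rewrite rsum_comm, (rsum_comm nx), <- rsum_scal.
  apply rsum_le. intros j Hj.
  replace (rsum (nx - 1) _)
    with (hh y j * rsum (nx - 1) (fun k => hn nx x (S k) * ex (2 * S k)%nat (2*j+1)%nat ^ 2))
    by (rewrite <- rsum_scal; apply rsum_ext; intros; ring).
  replace (a * a * rsum nx _)
    with (hh y j * (a * a * rsum nx (fun i => hh x i * dq x (fun K => ex K (2*j+1)%nat) i ^ 2)))
    by (rewrite <- !rsum_scal; apply rsum_ext; intros; unfold d_x; ring).
  apply Rmult_le_compat_l; [auto|].
  apply (poincare nx x a Gx Ha (fun K => ex K (2*j+1)%nat)). apply Hex_x; auto.
Qed.

Lemma displacement_y_poincare :
  SMT (fun i j => ey (2*i+1)%nat (2 * S j)%nat ^ 2)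
  <= b * b * SM (fun i j => d_y y ey (2*i+1)%nat j ^ 2).
Proof.
  unfold SMT, SM, wsum2. rewrite <- rsum_scal.
  apply rsum_le. intros i Hi.
  replace (rsum (ny - 1) _)
    with (hh x i * rsum (ny - 1) (fun k => hn ny y (S k) * ey (2*i+1)%nat (2 * S k)%nat ^ 2))
    by (rewrite <- rsum_scal; apply rsum_ext; intros; ring).
  replace (b * b * rsum ny _)
    with (hh x i * (b * b * rsum ny (fun j => hh y j * dq y (fun M => ey (2*i+1)%nat M) j ^ 2)))
    by (rewrite <- !rsum_scal; apply rsum_ext; intros; unfold d_y; ring).
  apply Rmult_le_compat_l; [auto|].
  apply (poincare ny y b Gy Hb (fun M => ey (2*i+1)%nat M)). apply Hey_y; auto.
Qed.

Lemma strain_sq_bound u r Z Z' :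
  Rabs r <= rho ->
  / (2 * mu) * (Z - lam / (2 * lam + 2 * mu) * (Z + Z')) = u + r ->
  u ^ 2 <= 2 / mu ^ 2 * (Z ^ 2 + Z' ^ 2) + 2 * rho ^ 2.
Proof.
  intros Hr E. pose proof (compliance_sq_le lam mu Z Z' Hlam Hmu) as HA. rewrite E in HA.
  assert (r ^ 2 <= rho ^ 2).
  { rewrite <- (pow2_abs r). apply pow_incr. split; [apply Rabs_pos | lra]. }
  assert (2 / mu ^ 2 * (Z ^ 2 + Z' ^ 2) = 2 * ((Z ^ 2 + Z' ^ 2) / mu ^ 2)) by (field; lra).
  pose proof (pow2_ge_0 (u + 2 * r)). nra.
Qed.

Lemma strain_x_bound :
  SM (fun i j => d_x x ex i (2*j+1)%nat ^ 2)
  <= 2 / mu ^ 2 * SM (fun i j => Z1 i j ^ 2 + Z2 i j ^ 2) + 2 * rho ^ 2 * (a * b).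
Proof.
  eapply Rle_trans.
  - apply (wsum2_le _ _ _ _ hh_x_ge0 hh_y_ge0 _
      (fun i j => 2 / mu ^ 2 * (Z1 i j ^ 2 + Z2 i j ^ 2) + 2 * rho ^ 2)).
    intros i j Hi Hj. destruct (Hcomp i j Hi Hj) as [C1 _]. destruct (Br_comp i j Hi Hj) as [B _].
    exact (strain_sq_bound _ _ _ _ B C1).
  - unfold SM. rewrite wsum2_plus, wsum2_scal, wsum2_const, (sum_hh nx x a Gx), (sum_hh ny y b Gy).
    lra.
Qed.

Lemma strain_y_bound :
  SM (fun i j => d_y y ey (2*i+1)%nat j ^ 2)
  <= 2 / mu ^ 2 * SM (fun i j => Z1 i j ^ 2 + Z2 i j ^ 2) + 2 * rho ^ 2 * (a * b).
Proof.
  eapply Rle_trans.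
  - apply (wsum2_le _ _ _ _ hh_x_ge0 hh_y_ge0 _
      (fun i j => 2 / mu ^ 2 * (Z1 i j ^ 2 + Z2 i j ^ 2) + 2 * rho ^ 2)).
    intros i j Hi Hj. destruct (Hcomp i j Hi Hj) as [_ C2]. destruct (Br_comp i j Hi Hj) as [_ B].
    rewrite (Rplus_comm (z11 _ _)) in C2. rewrite (Rplus_comm (Z1 i j ^ 2)).
    exact (strain_sq_bound _ _ _ _ B C2).
  - unfold SM. rewrite wsum2_plus, wsum2_scal, wsum2_const, (sum_hh nx x a Gx), (sum_hh ny y b Gy).
    lra.
Qed.

Let P := SM (fun i j => Z1 i j ^ 2 + Z2 i j ^ 2).
Let Q := ST (fun i j => z12 (2*i)%nat (2*j)%nat ^ 2).
Let X := STM (fun i j => ex (2 * S i)%nat (2*j+1)%nat ^ 2).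
Let Y := SMT (fun i j => ey (2*i+1)%nat (2 * S j)%nat ^ 2).

Lemma coercivity_bound :
  coercivity_const lam mu * P <= SM (fun i j => A1 i j * Z1 i j + A2 i j * Z2 i j).
Proof.
  unfold P, SM. rewrite <- wsum2_scal. apply wsum2_le; auto. intros.
  apply (compliance_coercive lam mu); auto.
Qed.

Lemma young_compliance k : 0 < k ->
  SM (fun i j => Z1 i j * r11 (2*i+1)%nat (2*j+1)%nat + Z2 i j * r22 (2*i+1)%nat (2*j+1)%nat)
  <= k / 2 * P + rho ^ 2 / k * (a * b).
Proof.
  intros Hk. unfold P, SM. rewrite !wsum2_plus.
  pose proof (sum_hh nx x a Gx). pose proof (sum_hh ny y b Gy).
  assert (B1 := wsum2_young _ _ _ _ hh_x_ge0 hh_y_ge0 Z1 (fun i j => r11 (2*i+1)%nat (2*j+1)%nat)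
                 k rho a b Hk ltac:(lra) ltac:(lra) ltac:(intros; apply Br_comp; auto)).
  assert (B2 := wsum2_young _ _ _ _ hh_x_ge0 hh_y_ge0 Z2 (fun i j => r22 (2*i+1)%nat (2*j+1)%nat)
                 k rho a b Hk ltac:(lra) ltac:(lra) ltac:(intros; apply Br_comp; auto)).
  replace (rho ^ 2 / k) with (2 * (rho ^ 2 / (2 * k))) by (field; lra). lra.
Qed.

Lemma young_shear :
  / mu * ST (fun i j => z12 (2*i)%nat (2*j)%nat * r12 (2*i)%nat (2*j)%nat)
  <= / (2 * mu) * Q + mu * rho ^ 2 / 2 * (a * b).
Proof.
  assert (H := wsum2_young _ _ _ _ hn_x_ge0 hn_y_ge0 (fun i j => z12 (2*i)%nat (2*j)%nat)
                 (fun i j => r12 (2*i)%nat (2*j)%nat) 1 (mu * rho) a b ltac:(lra)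
                 ltac:(rewrite (sum_hn nx x a Gx Ha); lra) ltac:(rewrite (sum_hn ny y b Gy Hb); lra)
                 ltac:(intros; apply Br_shear; lia)).
  apply Rmult_le_compat_l with (r := / mu) in H; [|left; apply Rinv_0_lt_compat; lra].
  replace (/ (2 * mu) * Q + mu * rho ^ 2 / 2 * (a * b))
    with (/ mu * (1 / 2 * Q + (mu * rho) ^ 2 / (2 * 1) * (a * b))) by (field; lra).
  exact H.
Qed.

Lemma young_equilibrium_x eta : 0 < eta ->
  - STM (fun i j => ex (2 * S i)%nat (2*j+1)%nat * r1 (2 * S i)%nat (2*j+1)%nat)
  <= eta * X + rho ^ 2 / (4 * eta) * (a * b).
Proof.
  intros Heta.
  assert (H := wsum2_young _ _ _ _ hn_x_S_ge0 hh_y_ge0 (fun i j => ex (2 * S i)%nat (2*j+1)%nat)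
                 (fun i j => - r1 (2 * S i)%nat (2*j+1)%nat) (2 * eta) rho a b ltac:(lra)
                 (sum_hn_interior_le nx x a Gx Ha) ltac:(rewrite (sum_hh ny y b Gy); lra)
                 ltac:(intros; cbv beta; rewrite Rabs_Ropp; apply Br_eq_x; lia)).
  replace (2 * eta / 2) with eta in H by field. replace (2 * (2 * eta)) with (4 * eta) in H by ring.
  replace (- STM _) with (-1 * STM (fun i j => ex (2 * S i)%nat (2*j+1)%nat * r1 (2 * S i)%nat (2*j+1)%nat))
    by ring.
  unfold STM. rewrite <- wsum2_scal. erewrite wsum2_ext; [exact H|]. intros; simpl; ring.
Qed.

Lemma young_equilibrium_y eta : 0 < eta ->
  - SMT (fun i j => ey (2 * i + 1)%nat (2 * S j)%nat * r2 (2 * i + 1)%nat (2 * S j)%nat)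
  <= eta * Y + rho ^ 2 / (4 * eta) * (a * b).
Proof.
  intros Heta.
  assert (H := wsum2_young _ _ _ _ hh_x_ge0 hn_y_S_ge0 (fun i j => ey (2 * i + 1)%nat (2 * S j)%nat)
                 (fun i j => - r2 (2 * i + 1)%nat (2 * S j)%nat) (2 * eta) rho a b ltac:(lra)
                 ltac:(rewrite (sum_hh nx x a Gx); lra) (sum_hn_interior_le ny y b Gy Hb)
                 ltac:(intros; cbv beta; rewrite Rabs_Ropp; apply Br_eq_y; lia)).
  replace (2 * eta / 2) with eta in H by field. replace (2 * (2 * eta)) with (4 * eta) in H by ring.
  replace (- SMT _) with (-1 * SMT (fun i j => ey (2 * i + 1)%nat (2 * S j)%nat * r2 (2 * i + 1)%nat (2 * S j)%nat))
    by ring.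
  unfold SMT. rewrite <- wsum2_scal. erewrite wsum2_ext; [exact H|]. intros; simpl; ring.
Qed.

Lemma energy_bound :
  SM (fun i j => z11 (2*i+1)%nat (2*j+1)%nat ^ 2) <= energy_const a b lam mu * rho ^ 2 /\
  SM (fun i j => z22 (2*i+1)%nat (2*j+1)%nat ^ 2) <= energy_const a b lam mu * rho ^ 2 /\
  ST (fun i j => z12 (2*i)%nat (2*j)%nat ^ 2) <= energy_const a b lam mu * rho ^ 2 /\
  STM (fun i j => ex (2 * S i)%nat (2*j+1)%nat ^ 2) <= energy_const a b lam mu * rho ^ 2 /\
  SMT (fun i j => ey (2*i+1)%nat (2 * S j)%nat ^ 2) <= energy_const a b lam mu * rho ^ 2.
Proof.
  pose proof (coercivity_const_pos lam mu Hlam Hmu) as Hk1.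
  pose proof (young_weight_pos a b lam mu Ha Hb Hlam Hmu) as Heta.
  set (k1 := coercivity_const lam mu) in *. set (eta := young_weight a b lam mu) in *.
  assert (HP : P = SM (fun i j => Z1 i j ^ 2) + SM (fun i j => Z2 i j ^ 2)) by apply wsum2_plus.
  assert (HP1 : 0 <= SM (fun i j => Z1 i j ^ 2)) by (apply wsum2_sq_nonneg; auto).
  assert (HP2 : 0 <= SM (fun i j => Z2 i j ^ 2)) by (apply wsum2_sq_nonneg; auto).
  assert (HX := Rle_trans _ _ _ displacement_x_poincare
                  (Rmult_le_compat_l (a * a) _ _ ltac:(nra) strain_x_bound)).
  assert (HY := Rle_trans _ _ _ displacement_y_poincare
                  (Rmult_le_compat_l (b * b) _ _ ltac:(nra) strain_y_bound)).
  destruct (energy_absorb a b lam mu rho P Q X Y) as [BP [BQ [BX BY]]]; auto.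
  - lra.
  - apply wsum2_sq_nonneg; auto.
  - apply wsum2_sq_nonneg; auto.
  - apply wsum2_sq_nonneg; auto.
  - unfold k1, eta in *.
    pose proof energy_identity. pose proof coercivity_bound.
    pose proof (young_compliance _ Hk1). pose proof young_shear.
    pose proof (young_equilibrium_x _ Heta). pose proof (young_equilibrium_y _ Heta).
    replace (/ mu * Q) with (ST (fun i j => / mu * z12 (2*i)%nat (2*j)%nat ^ 2))
      by (unfold Q, ST; apply wsum2_scal).
    replace (rho ^ 2 / (2 * young_weight a b lam mu) * (a * b))
      with (rho ^ 2 / (4 * young_weight a b lam mu) * (a * b)
            + rho ^ 2 / (4 * young_weight a b lam mu) * (a * b)) by (field; lra).
    lra.
  - repeat split; auto.
    + change (SM (fun i j => Z1 i j ^ 2) <= energy_const a b lam mu * rho ^ 2). lra.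
    + change (SM (fun i j => Z2 i j ^ 2) <= energy_const a b lam mu * rho ^ 2). lra.
Qed.

End DiscreteEnergy.

(** * Taylor expansions and difference quotients *)

Definition smooth1 (f : R -> R) := forall k t, ex_derive (Derive_n f k) t.

Lemma smooth1_Derive_n f k : smooth1 f -> smooth1 (Derive_n f k).
Proof.
  intros H m t. apply (ex_derive_ext (Derive_n f (m + k))).
  - intros s. rewrite Derive_n_comp. reflexivity.
  - apply H.
Qed.

Lemma taylor_sum_at_0 n (g : nat -> R) :
  sum_f_R0 (fun m => 0 ^ m / INR (fact m) * g m) n = g O.
Proof.
  induction n; cbn [sum_f_R0]; [simpl; field|].
  rewrite IHn, pow_i by lia. unfold Rdiv. ring.
Qed.

Lemma taylor_remainder_bound f n x d M : smooth1 f -> 0 <= d ->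
  (forall s, x < s < x + d -> Rabs (Derive_n f (S n) s) <= M) ->
  Rabs (f (x + d) - sum_f_R0 (fun m => d ^ m / INR (fact m) * Derive_n f m x) n)
    <= M * d ^ (S n) / INR (fact (S n)).
Proof.
  intros Hf Hd HM. destruct Hd as [Hd | Hd].
  - assert (Hex : forall t, x <= t <= x + d -> forall k, (k <= S n)%nat -> ex_derive_n f k t).
    { intros t _ k _. destruct k; simpl; auto. }
    destruct (Taylor_Lagrange f n x (x + d) ltac:(lra) Hex) as [z [Hz E]].
    { replace (x + d - x) with d in E by ring. rewrite E.
      replace (sum_f_R0 (fun m : nat => d ^ m / INR (fact m) * Derive_n f m x) n +
        d ^ S n / INR (fact (S n)) * Derive_n f (S n) z -
        sum_f_R0 (fun m : nat => d ^ m / INR (fact m) * Derive_n f m x) n)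
        with (d ^ S n / INR (fact (S n)) * Derive_n f (S n) z) by ring.
      rewrite Rabs_mult. assert (0 < d ^ S n / INR (fact (S n))).
      { apply Rdiv_lt_0_compat. apply pow_lt; lra. apply INR_fact_lt_0. }
      rewrite (Rabs_right (d ^ S n / INR (fact (S n)))) by lra.
      pose proof (HM z ltac:(lra)).
      replace (M * d ^ S n / INR (fact (S n))) with (d ^ S n / INR (fact (S n)) * M) by (field; apply INR_fact_neq_0).
      apply Rmult_le_compat_l; lra. }
  - subst d. rewrite taylor_sum_at_0, Rplus_0_r. simpl Derive_n.
    replace (f x - f x) with 0 by ring. rewrite Rabs_R0. rewrite pow_i by lia. right. unfold Rdiv. ring.
Qed.

Section BoundedThirdDerivative.
Variable f : R -> R.
Hypothesis Hf : smooth1 f.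
Let D1 := Derive_n f 1.
Let D2 := Derive_n f 2.
Let D3 := Derive_n f 3.

Lemma taylor2_bound x d M : 0 <= d -> (forall s, x < s < x + d -> Rabs (D3 s) <= M) ->
  - (M * d ^ 3 / 6) <= f (x + d) - f x - d * D1 x - d ^ 2 / 2 * D2 x <= M * d ^ 3 / 6.
Proof.
  intros. pose proof (taylor_remainder_bound f 2 x d M Hf H H0). apply Rabs_le_between in H1.
  unfold D1, D2. simpl in *. lra.
Qed.

Lemma deriv_taylor1_bound x d M : 0 <= d -> (forall s, x < s < x + d -> Rabs (D3 s) <= M) ->
  - (M * d ^ 2 / 2) <= D1 (x + d) - D1 x - d * D2 x <= M * d ^ 2 / 2.
Proof.
  intros. assert (H1 : forall m s, Derive_n (Derive_n f 1) m s = Derive_n f (m + 1) s) by (intros; apply Derive_n_comp).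
  pose proof (taylor_remainder_bound (Derive_n f 1) 1 x d M (smooth1_Derive_n f 1 Hf) H) as T.
  specialize (T ltac:(intros s Hs; rewrite H1; apply H0; auto)).
  apply Rabs_le_between in T. cbn [sum_f_R0] in T. rewrite !H1 in T.
  unfold D1, D2. simpl in *. lra.
Qed.

Lemma deriv2_increment_bound x d M : 0 <= d -> (forall s, x < s < x + d -> Rabs (D3 s) <= M) ->
  - (M * d) <= D2 (x + d) - D2 x <= M * d.
Proof.
  intros. assert (H1 : forall m s, Derive_n (Derive_n f 2) m s = Derive_n f (m + 2) s) by (intros; apply Derive_n_comp).
  pose proof (taylor_remainder_bound (Derive_n f 2) 0 x d M (smooth1_Derive_n f 2 Hf) H) as T.
  specialize (T ltac:(intros s Hs; rewrite H1; apply H0; auto)).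
  apply Rabs_le_between in T. cbn [sum_f_R0] in T. rewrite !H1 in T.
  unfold D2. simpl in *. lra.
Qed.

End BoundedThirdDerivative.

Lemma between_scal c X B : 0 <= c -> - B <= X <= B -> - (c * B) <= c * X <= c * B.
Proof.
  intros. split; nra.
Qed.

Lemma increment_bound g x d M : smooth1 g -> 0 <= d -> (forall s, x < s < x + d -> Rabs (Derive_n g 1 s) <= M) ->
  Rabs (g (x + d) - g x) <= M * d.
Proof.
  intros. pose proof (taylor_remainder_bound g 0 x d M H H0 H1). simpl in H2.
  replace (g (x + d) - g x) with (g (x + d) - 1 / 1 * g x) by field.
  replace (M * d) with (M * (d * 1) / 1) by field. auto.
Qed.

Lemma Rabs_div_le N D B : 0 < D -> Rabs N <= B * D -> Rabs (N / D) <= B.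
Proof.
  intros. unfold Rdiv. rewrite Rabs_mult, Rabs_inv, (Rabs_right D) by lra.
  apply Rmult_le_reg_r with D; auto. rewrite Rmult_assoc, Rinv_l by lra. lra.
Qed.

Section DifferenceQuotients.
Variables f g : R -> R.
Hypotheses (Hf : smooth1 f) (Hg : smooth1 g).

(** The [h^2/8 f''] corrections are what make the difference quotient over a
    nonuniform stencil second-order accurate. *)
Lemma nonuniform_diff_error (c M t hp hm : R) : 0 <= M -> 0 <= hp -> 0 <= hm -> 0 < hp + hm ->
  (forall s, t - hm / 2 < s < t + hp / 2 -> Rabs (Derive_n f 3 s) <= M /\ Rabs (Derive_n g 1 s) <= M) ->
  Rabs (((f (t + hp / 2) - hp ^ 2 / 8 * Derive_n f 2 (t + hp / 2) - c * g (t + hp / 2))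
        - (f (t - hm / 2) - hm ^ 2 / 8 * Derive_n f 2 (t - hm / 2) - c * g (t - hm / 2)))
        / ((hm + hp) / 2) - Derive_n f 1 t)
  <= M * (hp ^ 2 + hm ^ 2) / 6 + Rabs c * M.
Proof.
  intros HM Hp Hm Hpm HB.
  set (d := hp / 2). set (e := hm / 2). set (s := t - e).
  assert (Hd : 0 <= d) by (unfold d; lra). assert (He : 0 <= e) by (unfold e; lra).
  assert (B1 : forall z, t < z < t + d -> Rabs (Derive_n f 3 z) <= M) by (intros; apply HB; unfold d, e in *; lra).
  assert (B2 : forall z, s < z < s + e -> Rabs (Derive_n f 3 z) <= M) by (intros; apply HB; unfold s, d, e in *; lra).
  pose proof (taylor2_bound f Hf t d M Hd B1) as A1.
  pose proof (deriv2_increment_bound f Hf t d M Hd B1) as A2.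
  pose proof (taylor2_bound f Hf s e M He B2) as A3.
  pose proof (deriv_taylor1_bound f Hf s e M He B2) as A4.
  assert (A5 : Rabs (g (s + (d + e)) - g s) <= M * (d + e)).
  { apply increment_bound; auto; [lra|]. intros; apply HB; unfold s, d, e in *; lra. }
  replace (s + e) with t in A3, A4 by (unfold s; ring).
  replace (s + (d + e)) with (t + d) in A5 by (unfold s; ring).
  replace (t + hp / 2) with (t + d) by auto. replace (t - hm / 2) with s by auto.
  replace ((hm + hp) / 2) with (d + e) by (unfold d, e; field).
  replace (hp ^ 2 / 8) with (d ^ 2 / 2) by (unfold d; field).
  replace (hm ^ 2 / 8) with (e ^ 2 / 2) by (unfold e; field).
  replace (M * (hp ^ 2 + hm ^ 2) / 6 + Rabs c * M) with (2 / 3 * M * (d ^ 2 + e ^ 2) + Rabs c * M) by (unfold d, e; field).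
  set (D1 := Derive_n f 1). set (D2 := Derive_n f 2).
  set (Num := (f (t + d) - d ^ 2 / 2 * D2 (t + d) - c * g (t + d) - (f s - e ^ 2 / 2 * D2 s - c * g s))).
  assert (Hde : 0 < d + e) by (unfold d, e; lra).
  replace (Num / (d + e) - D1 t) with ((Num - (d + e) * D1 t) / (d + e)) by (field; lra).
  apply Rabs_div_le; auto.
  assert (HId : Num - (d + e) * D1 t =
    ((f (t + d) - f t - d * D1 t - d ^ 2 / 2 * D2 t) - d ^ 2 / 2 * (D2 (t + d) - D2 t))
    - (- (f t - f s - e * D1 s - e ^ 2 / 2 * D2 s) + e * (D1 t - D1 s - e * D2 s))
    - c * (g (t + d) - g s))  by (unfold Num; field).
  rewrite HId. apply Rabs_le.
  pose proof (between_scal (d ^ 2 / 2) _ _ ltac:(nra) A2) as A2'.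
  pose proof (between_scal e _ _ He A4) as A4'.
  assert (A5' : Rabs (c * (g (t + d) - g s)) <= Rabs c * (M * (d + e))).
  { rewrite Rabs_mult. apply Rmult_le_compat_l; auto. apply Rabs_pos. }
  apply Rabs_le_between in A5'.
  assert (0 <= M * (d * e * (d + e))) by (apply Rmult_le_pos; auto; apply Rmult_le_pos; nra).
  fold D1 D2 in A1, A2', A3, A4'.
  assert (E1 : d ^ 2 / 2 * (M * d) = M * d ^ 3 / 2) by field.
  assert (E2 : e * (M * e ^ 2 / 2) = M * e ^ 3 / 2) by field.
  assert (E3 : (2 / 3 * M * (d ^ 2 + e ^ 2) + Rabs c * M) * (d + e) =
     M * d ^ 3 / 6 + M * d ^ 3 / 2 + M * e ^ 3 / 6 + M * e ^ 3 / 2 + Rabs c * (M * (d + e))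
     + 2 / 3 * (M * (d * e * (d + e)))) by field.
  rewrite E1 in A2'. rewrite E2 in A4'. rewrite E3. split; lra.
Qed.

Lemma centered_diff_error (c M t d : R) : 0 <= M -> 0 < d ->
  (forall s, t - d < s < t + d -> Rabs (Derive_n f 3 s) <= M /\ Rabs (Derive_n g 1 s) <= M) ->
  Rabs (((f (t + d) - c * g (t + d)) - (f (t - d) - c * g (t - d))) / (2 * d) - Derive_n f 1 t)
  <= 2 * M * d ^ 2 + Rabs c * M.
Proof.
  intros HM Hd HB. set (s := t - d).
  assert (B1 : forall z, t < z < t + d -> Rabs (Derive_n f 3 z) <= M) by (intros; apply HB; lra).
  assert (B2 : forall z, s < z < s + d -> Rabs (Derive_n f 3 z) <= M) by (intros; apply HB; unfold s in *; lra).
  pose proof (taylor2_bound f Hf t d M ltac:(lra) B1) as A1.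
  pose proof (taylor2_bound f Hf s d M ltac:(lra) B2) as A3.
  pose proof (deriv_taylor1_bound f Hf s d M ltac:(lra) B2) as A4.
  pose proof (deriv2_increment_bound f Hf s d M ltac:(lra) B2) as A2.
  assert (A5 : Rabs (g (s + (d + d)) - g s) <= M * (d + d)).
  { apply increment_bound; auto; [lra|]. intros; apply HB; unfold s in *; lra. }
  replace (s + d) with t in A2, A3, A4 by (unfold s; ring).
  replace (s + (d + d)) with (t + d) in A5 by (unfold s; ring).
  replace (t - d) with s by auto.
  set (D1 := Derive_n f 1). set (D2 := Derive_n f 2).
  set (Num := (f (t + d) - c * g (t + d) - (f s - c * g s))).
  replace (Num / (2 * d) - D1 t) with ((Num - (2 * d) * D1 t) / (2 * d)) by (field; lra).
  apply Rabs_div_le; [lra|].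
  assert (HId : Num - (2 * d) * D1 t =
    (f (t + d) - f t - d * D1 t - d ^ 2 / 2 * D2 t)
    + (f t - f s - d * D1 s - d ^ 2 / 2 * D2 s) - d * (D1 t - D1 s - d * D2 s)
    + d ^ 2 / 2 * (D2 t - D2 s)
    - c * (g (t + d) - g s)) by (unfold Num; field).
  rewrite HId. apply Rabs_le.
  pose proof (between_scal (d ^ 2 / 2) _ _ ltac:(nra) A2) as A2'.
  pose proof (between_scal d _ _ ltac:(lra) A4) as A4'.
  assert (A5' : Rabs (c * (g (t + d) - g s)) <= Rabs c * (M * (d + d))).
  { rewrite Rabs_mult. apply Rmult_le_compat_l; auto. apply Rabs_pos. }
  apply Rabs_le_between in A5'.
  assert (0 <= M * d ^ 3) by (apply Rmult_le_pos; auto; apply pow_le; lra).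
  fold D1 D2 in A1, A2', A3, A4'.
  assert (E1 : d ^ 2 / 2 * (M * d) = M * d ^ 3 / 2) by field.
  assert (E2 : d * (M * d ^ 2 / 2) = M * d ^ 3 / 2) by field.
  assert (E3 : (2 * M * d ^ 2 + Rabs c * M) * (2 * d) =
     M * d ^ 3 / 6 + M * d ^ 3 / 6 + M * d ^ 3 / 2 + M * d ^ 3 / 2 + Rabs c * (M * (d + d))
     + 8 / 3 * (M * d ^ 3)) by field.
  rewrite E1 in A2'. rewrite E2 in A4'. rewrite E3. split; lra.
Qed.
End DifferenceQuotients.

Lemma Derive_n_pd_x (u : R -> R -> R) w Y k s :
  Derive_n (fun t => pd w u t Y) k s = pd (repeat true k ++ w) u s Y.
Proof.
  revert s. induction k; intros s; simpl; auto.
  unfold pdx. apply Derive_ext. intros t. apply IHk.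
Qed.

Lemma Derive_n_pd_y (u : R -> R -> R) w X k s :
  Derive_n (fun t => pd w u X t) k s = pd (repeat false k ++ w) u X s.
Proof.
  revert s. induction k; intros s; simpl; auto.
  unfold pdy. apply Derive_ext. intros t. apply IHk.
Qed.

Lemma smooth1_pd_x u w Y : smooth2 u -> smooth1 (fun t => pd w u t Y).
Proof.
  intros H k t. apply (ex_derive_ext (fun t => pd (repeat true k ++ w) u t Y)).
  - intros s. rewrite Derive_n_pd_x. auto.
  - apply (H (repeat true k ++ w) t Y).
Qed.

Lemma smooth1_pd_y u w X : smooth2 u -> smooth1 (fun t => pd w u X t).
Proof.
  intros H k t. apply (ex_derive_ext (fun t => pd (repeat false k ++ w) u X t)).
  - intros s. rewrite Derive_n_pd_y. auto.
  - apply (H (repeat false k ++ w) X t).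
Qed.

Lemma Derive_n_eq0_on f b : (forall t, 0 < t < b -> f t = 0) -> forall k t, 0 < t < b -> Derive_n f k t = 0.
Proof.
  intros Hf k. induction k; intros t Ht; simpl; auto.
  rewrite (Derive_ext_loc _ (fun _ => 0)). apply Derive_const.
  assert (He : 0 < Rmin t (b - t)) by (apply Rmin_glb_lt; lra).
  exists (mkposreal _ He). intros s Hs. apply IHk.
  change (Rabs (s - t) < Rmin t (b - t)) in Hs. apply Rabs_def2 in Hs.
  pose proof (Rmin_l t (b - t)). pose proof (Rmin_r t (b - t)). lra.
Qed.

Lemma rectangle_interior_near a b X Y d : 0 < a -> 0 < b -> 0 < d ->
  0 <= X <= a -> 0 <= Y <= b ->
  exists X' Y', 0 < X' < a /\ 0 < Y' < b /\ Rabs (X' - X) < d /\ Rabs (Y' - Y) < d.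
Proof.
  intros Ha Hb Hd HX HY.
  set (s := Rmin (1/2) (d / (2 * (a + b)))).
  assert (Hs0 : 0 < s) by (unfold s; apply Rmin_glb_lt; [lra | apply Rdiv_lt_0_compat; lra]).
  assert (Hs1 : s <= 1/2) by apply Rmin_l.
  assert (Hs2 : s * (2 * (a + b)) <= d).
  { assert (Hsd : s <= d / (2 * (a + b))) by apply Rmin_r.
    apply Rmult_le_compat_r with (r := 2 * (a + b)) in Hsd; [|lra].
    replace (d / (2 * (a + b)) * (2 * (a + b))) with d in Hsd by (field; lra). lra. }
  exists (X + s * (a / 2 - X)), (Y + s * (b / 2 - Y)).
  replace (X + s * (a / 2 - X) - X) with (s * (a / 2 - X)) by ring.
  replace (Y + s * (b / 2 - Y) - Y) with (s * (b / 2 - Y)) by ring.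
  rewrite !Rabs_mult, !(Rabs_right s) by lra.
  assert (Rabs (a / 2 - X) <= a / 2 + a) by (apply Rabs_le; lra).
  assert (Rabs (b / 2 - Y) <= b / 2 + b) by (apply Rabs_le; lra).
  repeat split; nra.
Qed.

Lemma continuous2_eq0_on_closure (D : R -> R -> R) a b X Y : 0 < a -> 0 < b ->
  continuous (fun p : R * R => D (fst p) (snd p)) (X, Y) ->
  0 <= X <= a -> 0 <= Y <= b ->
  (forall X' Y', 0 < X' < a -> 0 < Y' < b -> D X' Y' = 0) -> D X Y = 0.
Proof.
  intros Ha Hb HC HX HY H0. destruct (Req_dec (D X Y) 0) as [|Hne]; auto. exfalso.
  assert (Heps : 0 < Rabs (D X Y)) by (apply Rabs_pos_lt; auto).
  apply (proj1 (filterlim_locally _ _)) with (eps := mkposreal _ Heps) in HC as [d Hd].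
  destruct (rectangle_interior_near a b X Y d Ha Hb (cond_pos d) HX HY)
    as [X' [Y' [HX' [HY' [DX DY]]]]].
  specialize (Hd (X', Y') (conj DX DY)). simpl in Hd.
  change (Rabs (D X' Y' - D X Y) < Rabs (D X Y)) in Hd.
  rewrite H0 in Hd by auto. rewrite Rminus_0_l, Rabs_Ropp in Hd. lra.
Qed.

Lemma Derive_n_const0 k t : Derive_n (fun _ => 0) k t = 0.
Proof.
  revert t. induction k; intros; simpl; auto. rewrite (Derive_ext _ (fun _ => 0)) by auto. apply Derive_const.
Qed.

Lemma smooth1_const0 : smooth1 (fun _ => 0).
Proof.
  intros k t. apply (ex_derive_ext (fun _ => 0)). intros; rewrite Derive_n_const0; auto. apply ex_derive_const.
Qed.

Section GridDerivative.
Variables (n : nat) (y : nat -> R) (b : R).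
Hypotheses (G : is_grid n y b) (Hb : 0 < b).

Lemma Dq_interpolant_error (f : R -> R) (Hf : smooth1 f) M (HM : 0 <= M)
  (HD3 : forall t, 0 < t < b -> Rabs (Derive_n f 3 t) <= M)
  (Hf0 : f (y O) = 0) (Hfn : f (y n) = 0) (phi : nat -> R)
  (Hp0 : phi O = 0) (Hpn : phi (2 * n)%nat = 0)
  (Hpk : forall k, (k < n)%nat -> phi (2 * k + 1)%nat =
      f ((y k + y (S k)) / 2) - (hh y k) ^ 2 / 8 * Derive_n f 2 ((y k + y (S k)) / 2)) :
  forall j, (j <= n)%nat -> Rabs (Dq n y phi j - Derive_n f 1 (y j)) <= M * (hmax n y) ^ 2 / 3.
Proof.
  intros j Hj. pose proof (grid_size_pos n y b G Hb) as Hn.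
  assert (HB : forall hp hm, 0 <= hp -> 0 <= hm -> 0 < hp + hm -> hp <= hmax n y -> hm <= hmax n y ->
    (forall s, y j - hm / 2 < s < y j + hp / 2 -> 0 < s < b) ->
    Dq n y phi j = ((f (y j + hp / 2) - hp ^ 2 / 8 * Derive_n f 2 (y j + hp / 2) - 0 * (fun _ => 0) (y j + hp / 2))
        - (f (y j - hm / 2) - hm ^ 2 / 8 * Derive_n f 2 (y j - hm / 2) - 0 * (fun _ => 0) (y j - hm / 2)))
        / ((hm + hp) / 2) ->
    Rabs (Dq n y phi j - Derive_n f 1 (y j)) <= M * (hmax n y) ^ 2 / 3).
  { intros hp hm H1 H2 H3 H4 H5 H6 E. rewrite E. eapply Rle_trans.
    - apply (nonuniform_diff_error f (fun _ => 0) Hf smooth1_const0 0 M (y j) hp hm HM H1 H2 H3).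
      intros s Hs. split; [apply HD3; auto|]. rewrite Derive_n_const0, Rabs_R0. auto.
    - rewrite Rabs_R0. assert (hp ^ 2 <= hmax n y ^ 2) by (apply pow_incr; lra).
      assert (hm ^ 2 <= hmax n y ^ 2) by (apply pow_incr; lra). nra. }
  destruct (Nat.eq_dec j 0) as [->|Hj0]; [|destruct (Nat.eq_dec j n) as [->|Hjn]].
  - pose proof (hh_pos n y b G 0 ltac:(lia)). pose proof (hh_le_hmax n y 0 ltac:(lia)).
    apply (HB (hh y 0) 0); try lra.
    + intros s Hs. pose proof (midpoint_range n y b G 0 ltac:(lia)). destruct G as [G0 _]. unfold hh in *. lra.
    + unfold Dq. simpl Nat.eqb. cbv iota. rewrite Hp0. pose proof (Hpk 0%nat ltac:(lia)) as Hk0. simpl (2 * 0 + 1)%nat in Hk0. rewrite Hk0.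
      replace (y 0%nat - 0 / 2) with (y 0%nat) by field. rewrite Hf0.
      replace (y 0%nat + hh y 0 / 2) with ((y 0%nat + y 1%nat) / 2) by (unfold hh; field).
      unfold hn. simpl Nat.eqb. cbv iota. field. lra.
  - pose proof (hh_pos n y b G (n-1) ltac:(lia)). pose proof (hh_le_hmax n y (n-1) ltac:(lia)).
    apply (HB 0 (hh y (n-1))); try lra.
    + intros s Hs. pose proof (midpoint_range n y b G (n-1) ltac:(lia)). replace (S (n-1)) with n in H1 by lia.
      destruct G as [_ [Gn _]]. unfold hh in *. replace (S (n-1)) with n in * by lia. lra.
    + unfold Dq. destruct (Nat.eqb_spec n 0); [lia|]. rewrite Nat.eqb_refl.
      rewrite Hpn. replace (2 * n - 1)%nat with (2 * (n - 1) + 1)%nat by lia. rewrite (Hpk (n-1)%nat) by lia.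
      replace (S (n-1)) with n by lia.
      replace (y n + 0 / 2) with (y n) by field. rewrite Hfn.
      replace (y n - hh y (n - 1) / 2) with ((y (n - 1)%nat + y n) / 2)
        by (unfold hh; replace (S (n-1)) with n by lia; field).
      unfold hn. destruct (Nat.eqb_spec n 0); [lia|]. rewrite Nat.eqb_refl. field. lra.
  - pose proof (hh_pos n y b G (j-1) ltac:(lia)). pose proof (hh_le_hmax n y (j-1) ltac:(lia)).
    pose proof (hh_pos n y b G j ltac:(lia)). pose proof (hh_le_hmax n y j ltac:(lia)).
    apply (HB (hh y j) (hh y (j-1))); try lra.
    + intros s Hs. pose proof (midpoint_range n y b G (j-1) ltac:(lia)). pose proof (midpoint_range n y b G j ltac:(lia)).
      replace (S (j-1)) with j in H3 by lia. unfold hh in *. replace (S (j-1)) with j in * by lia. lra.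
    + unfold Dq. destruct (Nat.eqb_spec j 0); [lia|]. destruct (Nat.eqb_spec j n); [lia|].
      replace (2 * j - 1)%nat with (2 * (j - 1) + 1)%nat by lia. rewrite !Hpk by lia.
      replace (S (j-1)) with j by lia.
      replace (y j - hh y (j - 1) / 2) with ((y (j - 1)%nat + y j) / 2)
        by (unfold hh; replace (S (j-1)) with j by lia; field).
      replace (y j + hh y j / 2) with ((y j + y (S j)) / 2) by (unfold hh; field).
      rewrite (hn_interior n y) by lia. field. lra.
Qed.

End GridDerivative.


Definition grid_boundary (nx ny K M : nat) : bool :=
  orb (orb (Nat.eqb K 0) (Nat.eqb K (2 * nx))) (orb (Nat.eqb M 0) (Nat.eqb M (2 * ny))).

(** The scheme's displacements vanish at all boundary points, while the
    interpolants [tux], [tuy] need not (their second-derivative corrections do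
    not vanish there).  Errors are therefore measured against the interpolants
    reset to [0] on the boundary; the two agree at every point entering the
    norms. *)
Definition dirichlet0 (nx ny : nat) (phi : nat -> nat -> R) (K M : nat) : R :=
  if grid_boundary nx ny K M then 0 else phi K M.

Lemma dirichlet0_boundary nx ny phi K M :
  (K = 0 \/ K = 2 * nx \/ M = 0 \/ M = 2 * ny)%nat -> dirichlet0 nx ny phi K M = 0.
Proof.
  intros H. unfold dirichlet0, grid_boundary.
  destruct H as [-> | [-> | [-> | ->]]]; rewrite Nat.eqb_refl, ?Bool.orb_true_r; reflexivity.
Qed.

Lemma dirichlet0_interior nx ny phi K M : (K <> 0 -> K <> 2 * nx -> M <> 0 -> M <> 2 * ny ->
  dirichlet0 nx ny phi K M = phi K M)%nat.
Proof.
  intros. unfold dirichlet0, grid_boundary.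
  rewrite (proj2 (Nat.eqb_neq K 0)), (proj2 (Nat.eqb_neq K (2 * nx))),
    (proj2 (Nat.eqb_neq M 0)), (proj2 (Nat.eqb_neq M (2 * ny))) by auto.
  reflexivity.
Qed.

Lemma compliance_abs_le lam mu C1 C2 B : 0 < lam -> 0 < mu -> 0 <= B ->
  Rabs C1 <= B -> Rabs C2 <= B ->
  Rabs (/ (2 * mu) * (C1 - lam / (2 * lam + 2 * mu) * (C1 + C2))) <= B / mu.
Proof.
  intros Hlam Hmu HB H1 H2. set (c := lam / (2 * lam + 2 * mu)).
  assert (Hc : 0 <= c <= 1/2).
  { unfold c. split; [apply Rdiv_le_0_compat; lra|].
    apply Rmult_le_reg_r with (2 * lam + 2 * mu); [lra|].
    unfold Rdiv. rewrite Rmult_assoc, Rinv_l by lra. lra. }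
  apply Rabs_le_between in H1. apply Rabs_le_between in H2.
  rewrite Rabs_mult, Rabs_right by (left; apply Rinv_0_lt_compat; lra).
  replace (B / mu) with (/ (2 * mu) * (2 * B)) by (field; lra).
  apply Rmult_le_compat_l; [left; apply Rinv_0_lt_compat; lra|]. apply Rabs_le. split; nra.
Qed.

(** * Truncation errors and the error estimate *)

Lemma tsig_kk_center x y s i j :
  tsig_kk x y s (2 * i + 1)%nat (2 * j + 1)%nat
  = s ((x i + x (S i)) / 2) ((y j + y (S j)) / 2)
    - (hh x i ^ 2 / 8 * pd (true :: true :: nil) s ((x i + x (S i)) / 2) ((y j + y (S j)) / 2)
       + hh y j ^ 2 / 8 * pd (false :: false :: nil) s ((x i + x (S i)) / 2) ((y j + y (S j)) / 2)).
Proof. unfold tsig_kk. rewrite !xh_double_S, !div2_double_S. simpl. ring. Qed.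

Lemma W3inf_bound_ge0 a b f M : 0 < a -> 0 < b -> W3inf_bound a b f M -> 0 <= M.
Proof.
  intros Ha Hb Bf. pose proof (Bf nil ltac:(simpl; lia) (a / 2) (b / 2) ltac:(lra) ltac:(lra)).
  pose proof (Rabs_pos (pd nil f (a / 2) (b / 2))). lra.
Qed.

Section ErrorAnalysis.
Variables (a b lam mu : R) (nx ny : nat) (x y : nat -> R).
Hypotheses (Ha : 0 < a) (Hb : 0 < b) (Hlam : 0 < lam) (Hmu : 0 < mu).
Hypotheses (Gx : is_grid nx x a) (Gy : is_grid ny y b).
Variables ux uy s11 s12 s22 fx fy : R -> R -> R.
Hypotheses (Su : smooth2 ux) (Sv : smooth2 uy) (S11 : smooth2 s11) (S12 : smooth2 s12) (S22 : smooth2 s22).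
Hypothesis EL : elasticity_solution a b lam mu ux uy s11 s12 s22 fx fy.
Variables Mu Ms : R.
Hypotheses (Bu : W3inf_bound a b ux Mu) (Bv : W3inf_bound a b uy Mu)
  (B11 : W3inf_bound a b s11 Ms) (B12 : W3inf_bound a b s12 Ms) (B22 : W3inf_bound a b s22 Ms).

Lemma Mu_ge0 : 0 <= Mu.
Proof. exact (W3inf_bound_ge0 a b ux Mu Ha Hb Bu). Qed.

Lemma Ms_ge0 : 0 <= Ms.
Proof. exact (W3inf_bound_ge0 a b s11 Ms Ha Hb B11). Qed.

Lemma x_range i : (i <= nx)%nat -> 0 <= x i <= a.
Proof. apply (grid_range nx x a Gx). Qed.

Lemma y_range j : (j <= ny)%nat -> 0 <= y j <= b.
Proof. apply (grid_range ny y b Gy). Qed.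

Lemma ux_boundary X Y : 0 <= X <= a -> 0 <= Y <= b -> (X = 0 \/ X = a \/ Y = 0 \/ Y = b) -> ux X Y = 0.
Proof.
  intros HX HY H. destruct EL as [_ [E1 E2]].
  destruct H as [H|[H|[H|H]]]; subst; [apply E2|apply E2|apply E1|apply E1]; auto.
Qed.
Lemma uy_boundary X Y : 0 <= X <= a -> 0 <= Y <= b -> (X = 0 \/ X = a \/ Y = 0 \/ Y = b) -> uy X Y = 0.
Proof.
  intros HX HY H. destruct EL as [_ [E1 E2]].
  destruct H as [H|[H|[H|H]]]; subst; [apply E2|apply E2|apply E1|apply E1]; auto.
Qed.

(** The [W^{3,oo}] bound only holds in the open rectangle; on the boundary
    lines [X = 0], [X = a] the bound comes from [ux] vanishing there. *)
Lemma ux_D3y_bound X t : 0 <= X <= a -> 0 < t < b -> Rabs (Derive_n (fun s => ux X s) 3 t) <= Mu.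
Proof.
  intros HX Ht. destruct (Req_dec X 0) as [E|E]; [|destruct (Req_dec X a) as [E'|E']].
  - rewrite (Derive_n_eq0_on _ b) by (auto; intros; apply ux_boundary; lra). rewrite Rabs_R0. apply Mu_ge0.
  - rewrite (Derive_n_eq0_on _ b) by (auto; intros; apply ux_boundary; lra). rewrite Rabs_R0. apply Mu_ge0.
  - replace (Derive_n (fun s => ux X s) 3 t) with (pd (repeat false 3 ++ nil) ux X t)
      by (symmetry; apply (Derive_n_pd_y ux nil X 3 t)).
    apply Bu; simpl; auto; lra.
Qed.

Lemma uy_D3x_bound Y t : 0 <= Y <= b -> 0 < t < a -> Rabs (Derive_n (fun s => uy s Y) 3 t) <= Mu.
Proof.
  intros HY Ht. destruct (Req_dec Y 0) as [E|E]; [|destruct (Req_dec Y b) as [E'|E']].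
  - rewrite (Derive_n_eq0_on _ a) by (auto; intros; apply uy_boundary; lra). rewrite Rabs_R0. apply Mu_ge0.
  - rewrite (Derive_n_eq0_on _ a) by (auto; intros; apply uy_boundary; lra). rewrite Rabs_R0. apply Mu_ge0.
  - replace (Derive_n (fun s => uy s Y) 3 t) with (pd (repeat true 3 ++ nil) uy t Y)
      by (symmetry; apply (Derive_n_pd_x uy nil Y 3 t)).
    apply Bv; simpl; auto; lra.
Qed.

Definition yc j := (y j + y (S j)) / 2.
Definition xc i := (x i + x (S i)) / 2.

Lemma yc_range j : (j < ny)%nat -> 0 < yc j < b.
Proof.
  intros. apply (midpoint_range ny y b Gy). auto.
Qed.
Lemma xc_range i : (i < nx)%nat -> 0 < xc i < a.
Proof.
  intros. apply (midpoint_range nx x a Gx). auto.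
Qed.

Lemma tux0_edge i j : (i <= nx)%nat -> (j < ny)%nat ->
  dirichlet0 nx ny (tux x y ux) (2 * i)%nat (2 * j + 1)%nat
  = ux (x i) (yc j) - (hh y j) ^ 2 / 8 * Derive_n (fun t => ux (x i) t) 2 (yc j).
Proof.
  intros Hi Hj. pose proof (x_range i Hi). pose proof (yc_range j Hj). unfold dirichlet0, grid_boundary.
  destruct (Nat.eqb_spec (2 * i) 0); [|destruct (Nat.eqb_spec (2 * i) (2 * nx))].
  - replace i with 0%nat by lia. simpl orb. cbv iota. destruct Gx as [G0 _]. rewrite G0.
    assert (Z : Derive_n (fun t => ux 0 t) 2 (yc j) = 0) by (apply (Derive_n_eq0_on _ b); [intros; apply ux_boundary; lra | auto]).
    rewrite Z, ux_boundary by lra. ring.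
  - replace i with nx by lia. simpl orb. cbv iota. destruct Gx as [G0 [Gn _]]. rewrite Gn.
    assert (Z : Derive_n (fun t => ux a t) 2 (yc j) = 0) by (apply (Derive_n_eq0_on _ b); [intros; apply ux_boundary; lra | auto]).
    rewrite Z, ux_boundary by lra. ring.
  - destruct (Nat.eqb_spec (2 * j + 1) 0); [lia|]. destruct (Nat.eqb_spec (2 * j + 1) (2 * ny)); [lia|].
    simpl orb. cbv iota. unfold tux. rewrite xh_double, xh_double_S, div2_double_S. fold (yc j).
    replace (Derive_n (fun t => ux (x i) t) 2 (yc j)) with (pd (repeat false 2 ++ nil) ux (x i) (yc j))
      by (symmetry; apply (Derive_n_pd_y ux nil (x i) 2 (yc j))). reflexivity.
Qed.

Lemma tuy0_edge i j : (i < nx)%nat -> (j <= ny)%nat ->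
  dirichlet0 nx ny (tuy x y uy) (2 * i + 1)%nat (2 * j)%nat
  = uy (xc i) (y j) - (hh x i) ^ 2 / 8 * Derive_n (fun t => uy t (y j)) 2 (xc i).
Proof.
  intros Hi Hj. pose proof (y_range j Hj). pose proof (xc_range i Hi). unfold dirichlet0, grid_boundary.
  destruct (Nat.eqb_spec (2 * i + 1) 0); [lia|]. destruct (Nat.eqb_spec (2 * i + 1) (2 * nx)); [lia|].
  destruct (Nat.eqb_spec (2 * j) 0); [|destruct (Nat.eqb_spec (2 * j) (2 * ny))].
  - replace j with 0%nat by lia. simpl orb. cbv iota. destruct Gy as [G0 _]. rewrite G0.
    assert (Z : Derive_n (fun t => uy t 0) 2 (xc i) = 0) by (apply (Derive_n_eq0_on _ a); [intros; apply uy_boundary; lra | auto]).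
    rewrite Z, uy_boundary by lra. ring.
  - replace j with ny by lia. simpl orb. cbv iota. destruct Gy as [G0 [Gn _]]. rewrite Gn.
    assert (Z : Derive_n (fun t => uy t b) 2 (xc i) = 0) by (apply (Derive_n_eq0_on _ a); [intros; apply uy_boundary; lra | auto]).
    rewrite Z, uy_boundary by lra. ring.
  - simpl orb. cbv iota. unfold tuy. rewrite xh_double, xh_double_S, div2_double_S. fold (xc i).
    replace (Derive_n (fun t => uy t (y j)) 2 (xc i)) with (pd (repeat true 2 ++ nil) uy (xc i) (y j))
      by (symmetry; apply (Derive_n_pd_x uy nil (y j) 2 (xc i))). reflexivity.
Qed.

Lemma Dy_tux0_error i j : (i <= nx)%nat -> (j <= ny)%nat ->
  Rabs (D_y ny y (dirichlet0 nx ny (tux x y ux)) (2 * i)%nat j - pdy ux (x i) (y j)) <= Mu * (hmax ny y) ^ 2 / 3.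
Proof.
  intros Hi Hj. pose proof (x_range i Hi) as HX. pose proof Gy as [G0 [Gn _]].
  apply (Dq_interpolant_error ny y b Gy Hb (fun t => ux (x i) t) (smooth1_pd_y ux nil (x i) Su) Mu Mu_ge0); auto.
  - intros t Ht. apply ux_D3y_bound; auto.
  - rewrite G0. apply ux_boundary; lra.
  - rewrite Gn. apply ux_boundary; lra.
  - apply dirichlet0_boundary; lia.
  - apply dirichlet0_boundary; lia.
  - intros k Hk. apply tux0_edge; auto.
Qed.

Lemma Dx_tuy0_error i j : (i <= nx)%nat -> (j <= ny)%nat ->
  Rabs (D_x nx x (dirichlet0 nx ny (tuy x y uy)) i (2 * j)%nat - pdx uy (x i) (y j)) <= Mu * (hmax nx x) ^ 2 / 3.
Proof.
  intros Hi Hj. pose proof (y_range j Hj) as HY. pose proof Gx as [G0 [Gn _]].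
  apply (Dq_interpolant_error nx x a Gx Ha (fun t => uy t (y j)) (smooth1_pd_x uy nil (y j) Sv) Mu Mu_ge0); auto.
  - intros t Ht. apply uy_D3x_bound; auto.
  - rewrite G0. apply uy_boundary; lra.
  - rewrite Gn. apply uy_boundary; lra.
  - apply dirichlet0_boundary; lia.
  - intros k Hk. apply tuy0_edge; auto.
Qed.

Lemma s12_at_node i j : (i <= nx)%nat -> (j <= ny)%nat ->
  s12 (x i) (y j) = mu * (pdy ux (x i) (y j) + pdx uy (x i) (y j)).
Proof.
  intros Hi Hj. apply Rminus_diag_uniq.
  apply (continuous2_eq0_on_closure (fun X Y => s12 X Y - mu * (pdy ux X Y + pdx uy X Y)) a b);
    auto using x_range, y_range.
  - apply (continuous_minus (V := R_NormedModule)); [apply (S12 nil)|].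
    apply (continuous_mult (K := R_AbsRing)); [apply continuous_const|].
    apply (continuous_plus (V := R_NormedModule)); [apply (Su (false :: nil)) | apply (Sv (true :: nil))].
  - intros X' Y' H1 H2. destruct EL as [E _]. rewrite (proj1 (proj2 (proj2 (E X' Y' H1 H2)))). ring.
Qed.


Let hx := hmax nx x.
Let ly := hmax ny y.

Lemma hh_x_le i : (i < nx)%nat -> 0 < hh x i <= hx.
Proof.
  intros. split. apply (hh_pos nx x a Gx); auto. apply rmax_ge; auto.
Qed.
Lemma hh_y_le j : (j < ny)%nat -> 0 < hh y j <= ly.
Proof.
  intros. split. apply (hh_pos ny y b Gy); auto. apply rmax_ge; auto.
Qed.

Lemma curvature_correction_bound s h l X Y : W3inf_bound a b s Ms ->
  0 < X < a -> 0 < Y < b -> 0 <= h <= hx -> 0 <= l <= ly ->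
  Rabs (h ^ 2 / 8 * pd (true :: true :: nil) s X Y + l ^ 2 / 8 * pd (false :: false :: nil) s X Y)
  <= (hx ^ 2 + ly ^ 2) / 8 * Ms.
Proof.
  intros Bs HX HY Hh Hl. eapply Rle_trans; [apply Rabs_triang|]. rewrite !Rabs_mult.
  pose proof (Bs (true :: true :: nil) ltac:(simpl; lia) X Y HX HY).
  pose proof (Bs (false :: false :: nil) ltac:(simpl; lia) X Y HX HY).
  assert (h ^ 2 <= hx ^ 2) by (apply pow_incr; lra).
  assert (l ^ 2 <= ly ^ 2) by (apply pow_incr; lra).
  rewrite !(Rabs_right (_ ^ 2 / 8)) by (apply Rle_ge, Rdiv_le_0_compat; [apply pow2_ge_0 | lra]).
  pose proof (pow2_ge_0 h). pose proof (pow2_ge_0 l).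
  pose proof (Rabs_pos (pd (true :: true :: nil) s X Y)).
  pose proof (Rabs_pos (pd (false :: false :: nil) s X Y)).
  nra.
Qed.

Lemma compliance_correction_bound s s' h l X Y : W3inf_bound a b s Ms -> W3inf_bound a b s' Ms ->
  0 < X < a -> 0 < Y < b -> 0 <= h <= hx -> 0 <= l <= ly ->
  let C s := h ^ 2 / 8 * pd (true :: true :: nil) s X Y + l ^ 2 / 8 * pd (false :: false :: nil) s X Y in
  Rabs (/ (2 * mu) * (C s - lam / (2 * lam + 2 * mu) * (C s + C s'))) <= (hx ^ 2 + ly ^ 2) * Ms / mu.
Proof.
  intros Bs Bs' HX HY Hh Hl C.
  assert (H0 : 0 <= hx ^ 2 + ly ^ 2) by (pose proof (pow2_ge_0 hx); pose proof (pow2_ge_0 ly); lra).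
  eapply Rle_trans.
  - apply (compliance_abs_le lam mu _ _ ((hx ^ 2 + ly ^ 2) / 8 * Ms) Hlam Hmu).
    + apply Rmult_le_pos; [lra | apply Ms_ge0].
    + exact (curvature_correction_bound s h l X Y Bs HX HY Hh Hl).
    + exact (curvature_correction_bound s' h l X Y Bs' HX HY Hh Hl).
  - unfold Rdiv. apply Rmult_le_compat_r; [left; apply Rinv_0_lt_compat; lra|].
    pose proof Ms_ge0. nra.
Qed.

Lemma dx_tux0_error i j : (i < nx)%nat -> (j < ny)%nat ->
  Rabs (d_x x (dirichlet0 nx ny (tux x y ux)) i (2 * j + 1)%nat - pdx ux (xc i) (yc j))
  <= (hx ^ 2 + ly ^ 2) * Mu.
Proof.
  intros Hi Hj. pose proof (xc_range i Hi) as HXi. pose proof (yc_range j Hj) as HY.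
  pose proof (hh_x_le i Hi) as Hhi. pose proof (hh_y_le j Hj) as Hlj.
  pose proof Mu_ge0 as HMu. pose proof Ms_ge0 as HMs.
  set (Xi := xc i). set (Y := yc j). set (d := hh x i / 2). set (cc := (hh y j) ^ 2 / 8).
  set (f := fun t => ux t Y). set (g := fun t => pd (false :: false :: nil) ux t Y).
  assert (Hxr : forall s, Xi - d < s < Xi + d -> 0 < s < a).
  { intros s Hs. pose proof (x_range i ltac:(lia)). pose proof (x_range (S i) ltac:(lia)).
    unfold Xi, xc, d, hh in *. lra. }
  assert (E1 : d_x x (dirichlet0 nx ny (tux x y ux)) i (2 * j + 1)%nat =
     ((f (Xi + d) - cc * g (Xi + d)) - (f (Xi - d) - cc * g (Xi - d))) / (2 * d)).
  { unfold d_x, dq. replace (2 * i + 2)%nat with (2 * S i)%nat by lia.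
    rewrite (tux0_edge (S i) j), (tux0_edge i j) by lia. fold Y.
    replace (Xi + d) with (x (S i)) by (unfold Xi, xc, d, hh; field).
    replace (Xi - d) with (x i) by (unfold Xi, xc, d, hh; field).
    replace (2 * d) with (hh x i) by (unfold d; field).
    unfold f, g, cc.
    replace (Derive_n (fun t => ux (x (S i)) t) 2 Y) with (pd (repeat false 2 ++ nil) ux (x (S i)) Y)
      by (symmetry; apply (Derive_n_pd_y ux nil (x (S i)) 2 Y)).
    replace (Derive_n (fun t => ux (x i) t) 2 Y) with (pd (repeat false 2 ++ nil) ux (x i) Y)
      by (symmetry; apply (Derive_n_pd_y ux nil (x i) 2 Y)). reflexivity. }
  pose proof (centered_diff_error f g (smooth1_pd_x ux nil Y Su) (smooth1_pd_x ux (false :: false :: nil) Y Su) cc Mu Xi d HMu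
     ltac:(unfold d; lra)) as DQ.
  specialize (DQ ltac:(intros s Hs; pose proof (Hxr s Hs); split;
     [ replace (Derive_n f 3 s) with (pd (repeat true 3 ++ nil) ux s Y) by (symmetry; apply (Derive_n_pd_x ux nil Y 3 s));
       apply Bu; simpl; auto; lia
     | change (Rabs (pd (true :: false :: false :: nil) ux s Y) <= Mu); apply Bu; simpl; auto; lia])).
  rewrite E1. change (pdx ux Xi Y) with (Derive_n f 1 Xi). eapply Rle_trans; [exact DQ|].
  assert (hh x i ^ 2 <= hx ^ 2) by (apply pow_incr; lra).
  assert (hh y j ^ 2 <= ly ^ 2) by (apply pow_incr; lra).
  rewrite Rabs_right by (apply Rle_ge; unfold cc; apply Rdiv_le_0_compat; [apply pow2_ge_0|lra]).
  unfold d, cc. nra.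
Qed.

Lemma compliance_truncation_x i j : (i < nx)%nat -> (j < ny)%nat ->
  Rabs (d_x x (dirichlet0 nx ny (tux x y ux)) i (2 * j + 1)%nat
        - / (2 * mu) * (tsig_kk x y s11 (2 * i + 1)%nat (2 * j + 1)%nat
             - lam / (2 * lam + 2 * mu) * (tsig_kk x y s11 (2 * i + 1)%nat (2 * j + 1)%nat
                                           + tsig_kk x y s22 (2 * i + 1)%nat (2 * j + 1)%nat)))
  <= (hx ^ 2 + ly ^ 2) * Mu + (hx ^ 2 + ly ^ 2) * Ms / mu.
Proof.
  intros Hi Hj. pose proof (hh_x_le i Hi). pose proof (hh_y_le j Hj).
  pose proof (dx_tux0_error i j Hi Hj) as DQ.
  pose proof (compliance_correction_bound s11 s22 (hh x i) (hh y j) (xc i) (yc j) B11 B22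
                (xc_range i Hi) (yc_range j Hj) ltac:(lra) ltac:(lra)) as HA.
  destruct EL as [E _]. rewrite <- (proj1 (E (xc i) (yc j) (xc_range i Hi) (yc_range j Hj))) in DQ.
  rewrite !tsig_kk_center. fold (xc i) (yc j). cbv beta zeta in HA.
  match goal with |- Rabs ?L <= _ => match type of DQ with Rabs ?D <= _ => match type of HA with Rabs ?H <= _ =>
    replace L with (D + H) by ring end end end.
  eapply Rle_trans; [apply Rabs_triang|]. lra.
Qed.

Lemma dy_tuy0_error i j : (i < nx)%nat -> (j < ny)%nat ->
  Rabs (d_y y (dirichlet0 nx ny (tuy x y uy)) (2 * i + 1)%nat j - pdy uy (xc i) (yc j))
  <= (hx ^ 2 + ly ^ 2) * Mu.
Proof.
  intros Hi Hj. pose proof (xc_range i Hi) as HXi. pose proof (yc_range j Hj) as HY.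
  pose proof (hh_x_le i Hi) as Hhi. pose proof (hh_y_le j Hj) as Hlj.
  pose proof Mu_ge0 as HMu. pose proof Ms_ge0 as HMs.
  set (Xi := xc i). set (Y := yc j). set (d := hh y j / 2). set (cc := (hh x i) ^ 2 / 8).
  set (f := fun t => uy Xi t). set (g := fun t => pd (true :: true :: nil) uy Xi t).
  assert (Hyr : forall s, Y - d < s < Y + d -> 0 < s < b).
  { intros s Hs. pose proof (y_range j ltac:(lia)). pose proof (y_range (S j) ltac:(lia)).
    unfold Y, yc, d, hh in *. lra. }
  assert (E1 : d_y y (dirichlet0 nx ny (tuy x y uy)) (2 * i + 1)%nat j =
     ((f (Y + d) - cc * g (Y + d)) - (f (Y - d) - cc * g (Y - d))) / (2 * d)).
  { unfold d_y, dq. replace (2 * j + 2)%nat with (2 * S j)%nat by lia.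
    rewrite (tuy0_edge i (S j)), (tuy0_edge i j) by lia. fold Xi.
    replace (Y + d) with (y (S j)) by (unfold Y, yc, d, hh; field).
    replace (Y - d) with (y j) by (unfold Y, yc, d, hh; field).
    replace (2 * d) with (hh y j) by (unfold d; field).
    unfold f, g, cc.
    replace (Derive_n (fun t => uy t (y (S j))) 2 Xi) with (pd (repeat true 2 ++ nil) uy Xi (y (S j)))
      by (symmetry; apply (Derive_n_pd_x uy nil (y (S j)) 2 Xi)).
    replace (Derive_n (fun t => uy t (y j)) 2 Xi) with (pd (repeat true 2 ++ nil) uy Xi (y j))
      by (symmetry; apply (Derive_n_pd_x uy nil (y j) 2 Xi)). reflexivity. }
  pose proof (centered_diff_error f g (smooth1_pd_y uy nil Xi Sv) (smooth1_pd_y uy (true :: true :: nil) Xi Sv) cc Mu Y d HMu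
     ltac:(unfold d; lra)) as DQ.
  specialize (DQ ltac:(intros s Hs; pose proof (Hyr s Hs); split;
     [ replace (Derive_n f 3 s) with (pd (repeat false 3 ++ nil) uy Xi s) by (symmetry; apply (Derive_n_pd_y uy nil Xi 3 s));
       apply Bv; simpl; auto; lia
     | change (Rabs (pd (false :: true :: true :: nil) uy Xi s) <= Mu); apply Bv; simpl; auto; lia])).
  rewrite E1. change (pdy uy Xi Y) with (Derive_n f 1 Y). eapply Rle_trans; [exact DQ|].
  assert (hh x i ^ 2 <= hx ^ 2) by (apply pow_incr; lra).
  assert (hh y j ^ 2 <= ly ^ 2) by (apply pow_incr; lra).
  rewrite Rabs_right by (apply Rle_ge; unfold cc; apply Rdiv_le_0_compat; [apply pow2_ge_0|lra]).
  unfold d, cc. nra.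
Qed.

Lemma compliance_truncation_y i j : (i < nx)%nat -> (j < ny)%nat ->
  Rabs (d_y y (dirichlet0 nx ny (tuy x y uy)) (2 * i + 1)%nat j
        - / (2 * mu) * (tsig_kk x y s22 (2 * i + 1)%nat (2 * j + 1)%nat
             - lam / (2 * lam + 2 * mu) * (tsig_kk x y s11 (2 * i + 1)%nat (2 * j + 1)%nat
                                           + tsig_kk x y s22 (2 * i + 1)%nat (2 * j + 1)%nat)))
  <= (hx ^ 2 + ly ^ 2) * Mu + (hx ^ 2 + ly ^ 2) * Ms / mu.
Proof.
  intros Hi Hj. pose proof (hh_x_le i Hi). pose proof (hh_y_le j Hj).
  pose proof (dy_tuy0_error i j Hi Hj) as DQ.
  pose proof (compliance_correction_bound s22 s11 (hh x i) (hh y j) (xc i) (yc j) B22 B11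
                (xc_range i Hi) (yc_range j Hj) ltac:(lra) ltac:(lra)) as HA.
  destruct EL as [E _]. rewrite <- (proj1 (proj2 (E (xc i) (yc j) (xc_range i Hi) (yc_range j Hj)))) in DQ.
  rewrite !tsig_kk_center. fold (xc i) (yc j). cbv beta zeta in HA.
  match goal with |- Rabs ?L <= _ => match type of DQ with Rabs ?D <= _ => match type of HA with Rabs ?H <= _ =>
    replace L with (D + H) by ring end end end.
  eapply Rle_trans; [apply Rabs_triang|]. lra.
Qed.

Lemma Dx_tsig11_error i j : (1 <= i)%nat -> (i <= nx - 1)%nat -> (j < ny)%nat ->
  Rabs (D_x nx x (tsig_kk x y s11) i (2 * j + 1)%nat - pdx s11 (x i) (yc j))
  <= Ms * hx ^ 2 / 3 + ly ^ 2 / 8 * Ms.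
Proof.
  intros Hi1 Hi2 Hj. pose proof (yc_range j Hj) as HY.
  pose proof (hh_x_le i ltac:(lia)) as Hhi. pose proof (hh_x_le (i-1) ltac:(lia)) as Hhm. pose proof (hh_y_le j Hj) as Hlj.
  pose proof Ms_ge0 as HMs. pose proof (grid_interior nx x a Gx i Hi1 Hi2) as Hxi.
  set (t := x i). set (hp := hh x i). set (hm := hh x (i - 1)). set (Y := yc j). set (cc := (hh y j) ^ 2 / 8).
  set (f := fun s => s11 s Y). set (g := fun s => pd (false :: false :: nil) s11 s Y).
  assert (Xp : xc i = t + hp / 2) by (unfold xc, t, hp, hh; field).
  assert (Xm : xc (i - 1) = t - hm / 2) by (unfold xc, t, hm, hh; replace (S (i-1)) with i by lia; field).
  assert (Hxr : forall s, t - hm / 2 < s < t + hp / 2 -> 0 < s < a).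
  { intros s Hs. pose proof (xc_range i ltac:(lia)). pose proof (xc_range (i-1) ltac:(lia)). lra. }
  assert (E1 : D_x nx x (tsig_kk x y s11) i (2 * j + 1)%nat =
     ((f (t + hp / 2) - hp ^ 2 / 8 * Derive_n f 2 (t + hp / 2) - cc * g (t + hp / 2))
      - (f (t - hm / 2) - hm ^ 2 / 8 * Derive_n f 2 (t - hm / 2) - cc * g (t - hm / 2))) / ((hm + hp) / 2)).
  { unfold D_x, Dq. destruct (Nat.eqb_spec i 0); [lia|]. destruct (Nat.eqb_spec i nx); [lia|].
    rewrite (hn_interior nx x) by lia. fold hp hm.
    replace (2 * i - 1)%nat with (2 * (i - 1) + 1)%nat by lia.
    unfold tsig_kk. rewrite !xh_double_S, !div2_double_S. fold (xc i) (xc (i - 1)) (yc j). fold Y hp hm.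
    rewrite Xp, Xm. unfold f, g, cc.
    replace (Derive_n (fun s => s11 s Y) 2 (t + hp / 2)) with (pd (repeat true 2 ++ nil) s11 (t + hp / 2) Y)
      by (symmetry; apply (Derive_n_pd_x s11 nil Y 2 (t + hp / 2))).
    replace (Derive_n (fun s => s11 s Y) 2 (t - hm / 2)) with (pd (repeat true 2 ++ nil) s11 (t - hm / 2) Y)
      by (symmetry; apply (Derive_n_pd_x s11 nil Y 2 (t - hm / 2))).
    reflexivity. }
  assert (Hp0 : 0 <= hp) by (unfold hp; lra). assert (Hm0 : 0 <= hm) by (unfold hm; lra).
  assert (Hpm : 0 < hp + hm) by (unfold hp, hm; lra).
  pose proof (nonuniform_diff_error f g (smooth1_pd_x s11 nil Y S11) (smooth1_pd_x s11 (false :: false :: nil) Y S11) cc Ms t hp hm HMs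
    Hp0 Hm0 Hpm) as C.
  specialize (C ltac:(intros s Hs; pose proof (Hxr s Hs); split;
     [ replace (Derive_n f 3 s) with (pd (repeat true 3 ++ nil) s11 s Y) by (symmetry; apply (Derive_n_pd_x s11 nil Y 3 s));
       apply B11; simpl; auto; lia
     | change (Rabs (pd (true :: false :: false :: nil) s11 s Y) <= Ms); apply B11; simpl; auto; lia])).
  rewrite E1. change (pdx s11 t Y) with (Derive_n f 1 t). eapply Rle_trans; [exact C|].
  rewrite (Rabs_right cc) by (apply Rle_ge; unfold cc; apply Rdiv_le_0_compat; [apply pow2_ge_0|lra]).
  assert (hp ^ 2 <= hx ^ 2) by (apply pow_incr; unfold hp; lra).
  assert (hm ^ 2 <= hx ^ 2) by (apply pow_incr; unfold hm; lra).
  assert (hh y j ^ 2 <= ly ^ 2) by (apply pow_incr; lra).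
  unfold cc. nra.
Qed.

Lemma dy_tsig12_error i j : (1 <= i)%nat -> (i <= nx - 1)%nat -> (j < ny)%nat ->
  Rabs (d_y y (tsig12 x y s12) (2 * i)%nat j - pdy s12 (x i) (yc j)) <= ly ^ 2 / 2 * Ms.
Proof.
  intros Hi1 Hi2 Hj. pose proof (hh_y_le j Hj) as Hlj. pose proof Ms_ge0 as HMs.
  pose proof (grid_interior nx x a Gx i Hi1 Hi2) as Hxi.
  set (t := x i). set (Y := yc j).
  set (d := hh y j / 2). set (F := fun s => s12 t s).
  assert (E2 : d_y y (tsig12 x y s12) (2 * i)%nat j =
     ((F (Y + d) - 0 * (fun _ => 0) (Y + d)) - (F (Y - d) - 0 * (fun _ => 0) (Y - d))) / (2 * d)).
  { unfold d_y, dq, tsig12. replace (2 * j + 2)%nat with (2 * S j)%nat by lia. rewrite !xh_double.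
    replace (Y + d) with (y (S j)) by (unfold Y, yc, d, hh; field).
    replace (Y - d) with (y j) by (unfold Y, yc, d, hh; field).
    replace (2 * d) with (hh y j) by (unfold d; field). unfold F. fold t. field. lra. }
  assert (Hyr : forall s, Y - d < s < Y + d -> 0 < s < b).
  { intros s Hs. pose proof (y_range j ltac:(lia)). pose proof (y_range (S j) ltac:(lia)).
    unfold Y, yc, d, hh in *. lra. }
  pose proof (centered_diff_error F (fun _ => 0) (smooth1_pd_y s12 nil t S12) smooth1_const0 0 Ms Y d HMs ltac:(unfold d; lra)) as D.
  specialize (D ltac:(intros s Hs; pose proof (Hyr s Hs); split;
     [ replace (Derive_n F 3 s) with (pd (repeat false 3 ++ nil) s12 t s) by (symmetry; apply (Derive_n_pd_y s12 nil t 3 s));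
       apply B12; simpl; auto; lia
     | rewrite Derive_n_const0, Rabs_R0; auto])).
  rewrite E2. change (pdy s12 t Y) with (Derive_n F 1 Y). eapply Rle_trans; [exact D|].
  rewrite Rabs_R0. assert (hh y j ^ 2 <= ly ^ 2) by (apply pow_incr; lra). unfold d. nra.
Qed.

Lemma equilibrium_truncation_x i j : (1 <= i)%nat -> (i <= nx - 1)%nat -> (j < ny)%nat ->
  Rabs (fx (x i) (yc j) - D_x nx x (tsig_kk x y s11) i (2 * j + 1)%nat
        - d_y y (tsig12 x y s12) (2 * i)%nat j) <= (hx ^ 2 + ly ^ 2) * Ms.
Proof.
  intros Hi1 Hi2 Hj. pose proof Ms_ge0.
  pose proof (Dx_tsig11_error i j Hi1 Hi2 Hj). pose proof (dy_tsig12_error i j Hi1 Hi2 Hj).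
  destruct EL as [E _].
  rewrite <- (proj1 (proj2 (proj2 (proj2 (E (x i) (yc j) (grid_interior nx x a Gx i Hi1 Hi2) (yc_range j Hj)))))).
  match goal with |- Rabs (?A + ?B - ?P - ?Q) <= _ =>
    replace (A + B - P - Q) with (- (P - A) - (Q - B)) by ring end.
  eapply Rle_trans; [apply Rabs_triang|]. rewrite !Rabs_Ropp.
  pose proof (pow2_ge_0 hx). pose proof (pow2_ge_0 ly). nra.
Qed.

Lemma Dy_tsig22_error i j : (i < nx)%nat -> (1 <= j)%nat -> (j <= ny - 1)%nat ->
  Rabs (D_y ny y (tsig_kk x y s22) (2 * i + 1)%nat j - pdy s22 (xc i) (y j))
  <= Ms * ly ^ 2 / 3 + hx ^ 2 / 8 * Ms.
Proof.
  intros Hi Hj1 Hj2. pose proof (xc_range i Hi) as HX.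
  pose proof (hh_y_le j ltac:(lia)) as Hhj. pose proof (hh_y_le (j-1) ltac:(lia)) as Hhm. pose proof (hh_x_le i Hi) as Hhi.
  pose proof Ms_ge0 as HMs. pose proof (grid_interior ny y b Gy j Hj1 Hj2) as Hyj.
  set (t := y j). set (hp := hh y j). set (hm := hh y (j - 1)). set (X := xc i). set (cc := (hh x i) ^ 2 / 8).
  set (f := fun s => s22 X s). set (g := fun s => pd (true :: true :: nil) s22 X s).
  assert (Yp : yc j = t + hp / 2) by (unfold yc, t, hp, hh; field).
  assert (Ym : yc (j - 1) = t - hm / 2) by (unfold yc, t, hm, hh; replace (S (j-1)) with j by lia; field).
  assert (Hyr : forall s, t - hm / 2 < s < t + hp / 2 -> 0 < s < b).
  { intros s Hs. pose proof (yc_range j ltac:(lia)). pose proof (yc_range (j-1) ltac:(lia)). lra. }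
  assert (E1 : D_y ny y (tsig_kk x y s22) (2 * i + 1)%nat j =
     ((f (t + hp / 2) - hp ^ 2 / 8 * Derive_n f 2 (t + hp / 2) - cc * g (t + hp / 2))
      - (f (t - hm / 2) - hm ^ 2 / 8 * Derive_n f 2 (t - hm / 2) - cc * g (t - hm / 2))) / ((hm + hp) / 2)).
  { unfold D_y, Dq. destruct (Nat.eqb_spec j 0); [lia|]. destruct (Nat.eqb_spec j ny); [lia|].
    rewrite (hn_interior ny y) by lia. fold hp hm.
    replace (2 * j - 1)%nat with (2 * (j - 1) + 1)%nat by lia.
    unfold tsig_kk. rewrite !xh_double_S, !div2_double_S. fold (yc j) (yc (j - 1)) (xc i). fold X hp hm.
    rewrite Yp, Ym. unfold f, g, cc.
    replace (Derive_n (fun s => s22 X s) 2 (t + hp / 2)) with (pd (repeat false 2 ++ nil) s22 X (t + hp / 2))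
      by (symmetry; apply (Derive_n_pd_y s22 nil X 2 (t + hp / 2))).
    replace (Derive_n (fun s => s22 X s) 2 (t - hm / 2)) with (pd (repeat false 2 ++ nil) s22 X (t - hm / 2))
      by (symmetry; apply (Derive_n_pd_y s22 nil X 2 (t - hm / 2))).
    simpl. unfold Rdiv. ring. }
  assert (Hp0 : 0 <= hp) by (unfold hp; lra). assert (Hm0 : 0 <= hm) by (unfold hm; lra).
  assert (Hpm : 0 < hp + hm) by (unfold hp, hm; lra).
  pose proof (nonuniform_diff_error f g (smooth1_pd_y s22 nil X S22) (smooth1_pd_y s22 (true :: true :: nil) X S22) cc Ms t hp hm HMs
    Hp0 Hm0 Hpm) as C.
  specialize (C ltac:(intros s Hs; pose proof (Hyr s Hs); split;
     [ replace (Derive_n f 3 s) with (pd (repeat false 3 ++ nil) s22 X s) by (symmetry; apply (Derive_n_pd_y s22 nil X 3 s));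
       apply B22; simpl; auto; lia
     | change (Rabs (pd (false :: true :: true :: nil) s22 X s) <= Ms); apply B22; simpl; auto; lia])).
  rewrite E1. change (pdy s22 X t) with (Derive_n f 1 t). eapply Rle_trans; [exact C|].
  rewrite (Rabs_right cc) by (apply Rle_ge; unfold cc; apply Rdiv_le_0_compat; [apply pow2_ge_0|lra]).
  assert (hp ^ 2 <= ly ^ 2) by (apply pow_incr; unfold hp; lra).
  assert (hm ^ 2 <= ly ^ 2) by (apply pow_incr; unfold hm; lra).
  assert (hh x i ^ 2 <= hx ^ 2) by (apply pow_incr; lra).
  unfold cc. nra.
Qed.

Lemma dx_tsig12_error i j : (i < nx)%nat -> (1 <= j)%nat -> (j <= ny - 1)%nat ->
  Rabs (d_x x (tsig12 x y s12) i (2 * j)%nat - pdx s12 (xc i) (y j)) <= hx ^ 2 / 2 * Ms.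
Proof.
  intros Hi Hj1 Hj2. pose proof (hh_x_le i Hi) as Hhi. pose proof Ms_ge0 as HMs.
  pose proof (grid_interior ny y b Gy j Hj1 Hj2) as Hyj.
  set (t := y j). set (X := xc i).
  set (d := hh x i / 2). set (F := fun s => s12 s t).
  assert (E2 : d_x x (tsig12 x y s12) i (2 * j)%nat =
     ((F (X + d) - 0 * (fun _ => 0) (X + d)) - (F (X - d) - 0 * (fun _ => 0) (X - d))) / (2 * d)).
  { unfold d_x, dq, tsig12. replace (2 * i + 2)%nat with (2 * S i)%nat by lia. rewrite !xh_double.
    replace (X + d) with (x (S i)) by (unfold X, xc, d, hh; field).
    replace (X - d) with (x i) by (unfold X, xc, d, hh; field).
    replace (2 * d) with (hh x i) by (unfold d; field). unfold F. fold t. field. unfold hh in *; lra. }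
  assert (Hxr : forall s, X - d < s < X + d -> 0 < s < a).
  { intros s Hs. pose proof (x_range i ltac:(lia)). pose proof (x_range (S i) ltac:(lia)).
    unfold X, xc, d, hh in *. lra. }
  pose proof (centered_diff_error F (fun _ => 0) (smooth1_pd_x s12 nil t S12) smooth1_const0 0 Ms X d HMs ltac:(unfold d; lra)) as D.
  specialize (D ltac:(intros s Hs; pose proof (Hxr s Hs); split;
     [ replace (Derive_n F 3 s) with (pd (repeat true 3 ++ nil) s12 s t) by (symmetry; apply (Derive_n_pd_x s12 nil t 3 s));
       apply B12; simpl; auto; lia
     | rewrite Derive_n_const0, Rabs_R0; auto])).
  rewrite E2. change (pdx s12 X t) with (Derive_n F 1 X). eapply Rle_trans; [exact D|].
  rewrite Rabs_R0. assert (hh x i ^ 2 <= hx ^ 2) by (apply pow_incr; lra). unfold d. nra.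
Qed.

Lemma equilibrium_truncation_y i j : (i < nx)%nat -> (1 <= j)%nat -> (j <= ny - 1)%nat ->
  Rabs (fy (xc i) (y j) - d_x x (tsig12 x y s12) i (2 * j)%nat
        - D_y ny y (tsig_kk x y s22) (2 * i + 1)%nat j) <= (hx ^ 2 + ly ^ 2) * Ms.
Proof.
  intros Hi Hj1 Hj2. pose proof Ms_ge0.
  pose proof (Dy_tsig22_error i j Hi Hj1 Hj2). pose proof (dx_tsig12_error i j Hi Hj1 Hj2).
  destruct EL as [E _].
  rewrite <- (proj2 (proj2 (proj2 (proj2 (E (xc i) (y j) (xc_range i Hi) (grid_interior ny y b Gy j Hj1 Hj2)))))).
  match goal with |- Rabs (?A + ?B - ?P - ?Q) <= _ =>
    replace (A + B - P - Q) with (- (P - A) - (Q - B)) by ring end.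
  eapply Rle_trans; [apply Rabs_triang|]. rewrite !Rabs_Ropp.
  pose proof (pow2_ge_0 hx). pose proof (pow2_ge_0 ly). nra.
Qed.

Lemma truncations_le_rho :
  let rho := (2 + 1 / mu) * ((hx ^ 2 + ly ^ 2) * (Mu + Ms)) in
  (hx ^ 2 + ly ^ 2) * Mu + (hx ^ 2 + ly ^ 2) * Ms / mu <= rho /\
  (hx ^ 2 + ly ^ 2) * Ms <= rho /\
  Mu * ly ^ 2 / 3 + Mu * hx ^ 2 / 3 <= rho.
Proof.
  intros rho. pose proof Mu_ge0. pose proof Ms_ge0.
  assert (H2 : 0 <= hx ^ 2 + ly ^ 2) by (pose proof (pow2_ge_0 hx); pose proof (pow2_ge_0 ly); lra).
  assert (0 <= (hx ^ 2 + ly ^ 2) * Mu / mu) by (apply Rdiv_le_0_compat; [nra | lra]).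
  assert (0 <= (hx ^ 2 + ly ^ 2) * Ms / mu) by (apply Rdiv_le_0_compat; [nra | lra]).
  assert (rho = 2 * ((hx ^ 2 + ly ^ 2) * Mu) + 2 * ((hx ^ 2 + ly ^ 2) * Ms)
                + (hx ^ 2 + ly ^ 2) * Mu / mu + (hx ^ 2 + ly ^ 2) * Ms / mu) by (unfold rho; field; lra).
  pose proof (pow2_ge_0 hx). pose proof (pow2_ge_0 ly).
  repeat split; nra.
Qed.

Variables Wx Wy Z11 Z22 Z12 : nat -> nat -> R.
Hypothesis MS : MACE_solution nx ny x y lam mu fx fy Wx Wy Z11 Z22 Z12.

Let ex K M := Wx K M - dirichlet0 nx ny (tux x y ux) K M.
Let ey K M := Wy K M - dirichlet0 nx ny (tuy x y uy) K M.
Let z11 K M := Z11 K M - tsig_kk x y s11 K M.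
Let z22 K M := Z22 K M - tsig_kk x y s22 K M.
Let z12 K M := Z12 K M - tsig12 x y s12 K M.
Let c := lam / (2 * lam + 2 * mu).
(** Residuals of the error equations, i.e. the truncation errors of the
    interpolants, written on doubled indices. *)
Let r11 K M := / (2 * mu) * (z11 K M - c * (z11 K M + z22 K M)) - d_x x ex (Nat.div K 2) M.
Let r22 K M := / (2 * mu) * (z22 K M - c * (z11 K M + z22 K M)) - d_y y ey K (Nat.div M 2).
Let r12 K M := z12 K M - mu * (D_y ny y ex K (Nat.div M 2) + D_x nx x ey (Nat.div K 2) M).
Let r1 K M := D_x nx x z11 (Nat.div K 2) M + d_y y z12 K (Nat.div M 2).
Let r2 K M := d_x x z12 (Nat.div K 2) M + D_y ny y z22 K (Nat.div M 2).
Let rho := (2 + 1 / mu) * ((hx ^ 2 + ly ^ 2) * (Mu + Ms)).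

Lemma compliance_residual_bound i j : (i < nx)%nat -> (j < ny)%nat ->
  Rabs (r11 (2*i+1)%nat (2*j+1)%nat) <= rho /\ Rabs (r22 (2*i+1)%nat (2*j+1)%nat) <= rho.
Proof.
  intros Hi Hj. destruct MS as [_ [_ [_ [_ [MC _]]]]].
  destruct (MC i j Hi Hj) as [C1 C2]. cbv zeta in C1, C2.
  destruct truncations_le_rho as [Hrho _]. split.
  - unfold r11, z11, z22, ex. rewrite div2_double_S, d_x_minus.
    fold c in C1. rewrite <- C1.
    eapply Rle_trans; [|apply Hrho]. eapply Rle_trans; [|apply (compliance_truncation_x i j Hi Hj)].
    fold c. right. f_equal. ring.
  - unfold r22, z11, z22, ey. rewrite div2_double_S, d_y_minus.
    fold c in C2. rewrite <- C2.
    eapply Rle_trans; [|apply Hrho]. eapply Rle_trans; [|apply (compliance_truncation_y i j Hi Hj)].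
    fold c. right. f_equal. ring.
Qed.

Lemma shear_residual_bound i j : (i <= nx)%nat -> (j <= ny)%nat ->
  Rabs (r12 (2*i)%nat (2*j)%nat) <= mu * rho.
Proof.
  intros Hi Hj. destruct MS as [_ [_ [_ [_ [_ [M12 _]]]]]].
  unfold r12, z12, ex, ey. rewrite !div2_double, D_x_minus, D_y_minus.
  rewrite (M12 i j Hi Hj). unfold tsig12. rewrite !xh_double, (s12_at_node i j Hi Hj).
  pose proof (Dy_tux0_error i j Hi Hj) as R1. pose proof (Dx_tuy0_error i j Hi Hj) as R2.
  match goal with |- Rabs ?E <= _ =>
    replace E with (mu * ((D_y ny y (dirichlet0 nx ny (tux x y ux)) (2 * i) j - pdy ux (x i) (y j))
      + (D_x nx x (dirichlet0 nx ny (tuy x y uy)) i (2 * j) - pdx uy (x i) (y j)))) by ring end.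
  rewrite Rabs_mult, Rabs_right by lra. apply Rmult_le_compat_l; [lra|].
  eapply Rle_trans; [apply Rabs_triang|].
  destruct truncations_le_rho as [_ [_ Hrho]]. fold hx ly in R1, R2. unfold rho. lra.
Qed.

Lemma equilibrium_residual_x_bound i j : (1 <= i)%nat -> (i <= nx - 1)%nat -> (j < ny)%nat ->
  Rabs (r1 (2*i)%nat (2*j+1)%nat) <= rho.
Proof.
  intros H1 H2 H3. destruct MS as [_ [_ [_ [_ [_ [_ [ME1 _]]]]]]].
  unfold r1, z11, z12. rewrite div2_double, div2_double_S, D_x_minus, d_y_minus.
  pose proof (ME1 i j H1 H2 H3) as E. rewrite xh_double, xh_double_S in E. fold (yc j) in E.
  match goal with |- Rabs ?L <= _ =>
    replace L with ((D_x nx x Z11 i (2 * j + 1) + d_y y Z12 (2 * i) j)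
      - D_x nx x (tsig_kk x y s11) i (2 * j + 1) - d_y y (tsig12 x y s12) (2 * i) j) by ring end.
  rewrite E. eapply Rle_trans; [apply (equilibrium_truncation_x i j H1 H2 H3)|].
  apply truncations_le_rho.
Qed.

Lemma equilibrium_residual_y_bound i j : (i < nx)%nat -> (1 <= j)%nat -> (j <= ny - 1)%nat ->
  Rabs (r2 (2*i+1)%nat (2*j)%nat) <= rho.
Proof.
  intros H1 H2 H3. destruct MS as [_ [_ [_ [_ [_ [_ [_ ME2]]]]]]].
  unfold r2, z22, z12. rewrite div2_double, div2_double_S, d_x_minus, D_y_minus.
  pose proof (ME2 i j H1 H2 H3) as E. rewrite xh_double, xh_double_S in E. fold (xc i) in E.
  match goal with |- Rabs ?L <= _ =>
    replace L with ((d_x x Z12 i (2 * j) + D_y ny y Z22 (2 * i + 1) j)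
      - d_x x (tsig12 x y s12) i (2 * j) - D_y ny y (tsig_kk x y s22) (2 * i + 1) j) by ring end.
  rewrite E. eapply Rle_trans; [apply (equilibrium_truncation_y i j H1 H2 H3)|].
  apply truncations_le_rho.
Qed.

Lemma error_energy_bound :
  let K := energy_const a b lam mu * rho ^ 2 in
  wsum2 nx ny (hh x) (hh y) (fun i j => z11 (2*i+1)%nat (2*j+1)%nat ^ 2) <= K /\
  wsum2 nx ny (hh x) (hh y) (fun i j => z22 (2*i+1)%nat (2*j+1)%nat ^ 2) <= K /\
  wsum2 (S nx) (S ny) (hn nx x) (hn ny y) (fun i j => z12 (2*i)%nat (2*j)%nat ^ 2) <= K /\
  wsum2 (nx - 1) ny (fun i => hn nx x (S i)) (hh y) (fun i j => ex (2 * S i)%nat (2*j+1)%nat ^ 2) <= K /\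
  wsum2 nx (ny - 1) (hh x) (fun j => hn ny y (S j)) (fun i j => ey (2*i+1)%nat (2 * S j)%nat ^ 2) <= K.
Proof.
  destruct MS as [MW1 [MW2 [MW3 [MW4 _]]]].
  apply (energy_bound nx ny x y a b lam mu Gx Gy Ha Hb Hlam Hmu ex ey z11 z22 z12 r11 r22 r12 r1 r2 rho).
  - intros i Hi. unfold ex. destruct (MW1 i Hi) as [-> ->].
    rewrite !dirichlet0_boundary by lia. split; ring.
  - intros j Hj. unfold ex. destruct (MW2 j Hj) as [-> ->].
    rewrite !dirichlet0_boundary by lia. split; ring.
  - intros i Hi. unfold ey. destruct (MW3 i Hi) as [-> ->].
    rewrite !dirichlet0_boundary by lia. split; ring.
  - intros j Hj. unfold ey. destruct (MW4 j Hj) as [-> ->].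
    rewrite !dirichlet0_boundary by lia. split; ring.
  - intros i j Hi Hj. unfold r11, r22. rewrite !div2_double_S. fold c. split; ring.
  - intros i j Hi Hj. unfold r12. rewrite !div2_double. ring.
  - intros i j H1 H2 H3. unfold r1. rewrite div2_double, div2_double_S. reflexivity.
  - intros i j H1 H2 H3. unfold r2. rewrite div2_double, div2_double_S. reflexivity.
  - exact compliance_residual_bound.
  - exact shear_residual_bound.
  - exact equilibrium_residual_x_bound.
  - exact equilibrium_residual_y_bound.
Qed.

Lemma sqrt_le_energy S0 : 0 <= S0 -> S0 <= energy_const a b lam mu * rho ^ 2 ->
  sqrt S0 <= sqrt (energy_const a b lam mu) * rho.
Proof.
  intros HS0 HS. assert (Hrho : 0 <= rho).
  { unfold rho. pose proof Mu_ge0. pose proof Ms_ge0. pose proof (pow2_ge_0 hx). pose proof (pow2_ge_0 ly).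
    assert (0 < 1 / mu) by (apply Rdiv_lt_0_compat; lra). apply Rmult_le_pos; nra. }
  destruct (Rle_or_lt 0 (energy_const a b lam mu)) as [HK|HK].
  - rewrite <- (sqrt_pow2 rho Hrho), <- sqrt_mult_alt by auto. apply sqrt_le_1_alt. auto.
  - assert (S0 = 0) by (pose proof (pow2_ge_0 rho); nra). subst. rewrite sqrt_0.
    pose proof (sqrt_pos (energy_const a b lam mu)). nra.
Qed.

Lemma scheme_error_estimate :
  let A := sqrt (energy_const a b lam mu) * (2 + 1 / mu) * ((hx ^ 2 + ly ^ 2) * (Mu + Ms)) in
  normTM nx ny x y (fun K M => Wx K M - tux x y ux K M) <= A /\
  normMT nx ny x y (fun K M => Wy K M - tuy x y uy K M) <= A /\
  normT nx ny x y (fun K M => Z12 K M - tsig12 x y s12 K M) <= A /\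
  normM nx ny x y (fun K M => Z11 K M - tsig_kk x y s11 K M) <= A /\
  normM nx ny x y (fun K M => Z22 K M - tsig_kk x y s22 K M) <= A.
Proof.
  intros A. replace A with (sqrt (energy_const a b lam mu) * rho) by (unfold A, rho; ring).
  pose proof (grid_size_pos nx x a Gx Ha) as Hnx. pose proof (grid_size_pos ny y b Gy Hb) as Hny.
  assert (nTM : normTM nx ny x y (fun K M => Wx K M - tux x y ux K M) =
     sqrt (wsum2 (nx - 1) ny (fun i => hn nx x (S i)) (hh y) (fun i j => ex (2 * S i)%nat (2 * j + 1)%nat ^ 2))).
  { unfold normTM, wsum2. f_equal. apply rsum_ext; intros i Hi; apply rsum_ext; intros j Hj.
    unfold ex. rewrite dirichlet0_interior by lia. reflexivity. }
  assert (nMT : normMT nx ny x y (fun K M => Wy K M - tuy x y uy K M) =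
     sqrt (wsum2 nx (ny - 1) (hh x) (fun j => hn ny y (S j)) (fun i j => ey (2 * i + 1)%nat (2 * S j)%nat ^ 2))).
  { unfold normMT, wsum2. f_equal. apply rsum_ext; intros i Hi; apply rsum_ext; intros j Hj.
    unfold ey. rewrite dirichlet0_interior by lia. reflexivity. }
  rewrite nTM, nMT.
  destruct error_energy_bound as [E11 [E22 [E12 [EX EY]]]].
  assert (Hx : forall i, (i < nx)%nat -> 0 <= hh x i) by (intros; left; apply (hh_pos nx x a Gx); auto).
  assert (Hy : forall j, (j < ny)%nat -> 0 <= hh y j) by (intros; left; apply (hh_pos ny y b Gy); auto).
  assert (Hnx' : forall i, (i < S nx)%nat -> 0 <= hn nx x i) by (intros; left; apply (hn_pos nx x a Gx Ha); lia).
  assert (Hny' : forall j, (j < S ny)%nat -> 0 <= hn ny y j) by (intros; left; apply (hn_pos ny y b Gy Hb); lia).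
  assert (Hnx'' : forall i, (i < nx - 1)%nat -> 0 <= hn nx x (S i)) by (intros; left; apply (hn_pos nx x a Gx Ha); lia).
  assert (Hny'' : forall j, (j < ny - 1)%nat -> 0 <= hn ny y (S j)) by (intros; left; apply (hn_pos ny y b Gy Hb); lia).
  repeat split.
  - apply sqrt_le_energy; [apply wsum2_sq_nonneg | exact EX]; auto.
  - apply sqrt_le_energy; [apply wsum2_sq_nonneg | exact EY]; auto.
  - apply (sqrt_le_energy (wsum2 (S nx) (S ny) (hn nx x) (hn ny y) (fun i j => z12 (2*i)%nat (2*j)%nat ^ 2)));
      [apply wsum2_sq_nonneg | exact E12]; auto.
  - apply (sqrt_le_energy (wsum2 nx ny (hh x) (hh y) (fun i j => z11 (2*i+1)%nat (2*j+1)%nat ^ 2)));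
      [apply wsum2_sq_nonneg | exact E11]; auto.
  - apply (sqrt_le_energy (wsum2 nx ny (hh x) (hh y) (fun i j => z22 (2*i+1)%nat (2*j+1)%nat ^ 2)));
      [apply wsum2_sq_nonneg | exact E22]; auto.
Qed.

End ErrorAnalysis.

Definition error_const a b lam mu :=
  sqrt (energy_const a b lam mu) * (2 + 1 / mu) * (2 + 1 / mu + 2 / (lam + mu)) + 1.

Lemma error_const_spec a b lam mu Q : 0 < lam -> 0 < mu -> 0 <= Q ->
  let A := sqrt (energy_const a b lam mu) * (2 + 1 / mu) * Q in
  0 < error_const a b lam mu /\
  A + A <= error_const a b lam mu * Q /\
  A <= error_const a b lam mu * mu * Q /\
  A + A <= error_const a b lam mu * (lam + mu) * Q.
Proof.
  intros Hlam Hmu HQ A. unfold A, error_const.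
  set (K := sqrt (energy_const a b lam mu) * (2 + 1 / mu)).
  assert (H1 : 0 < 1 / mu) by (apply Rdiv_lt_0_compat; lra).
  assert (H2 : 0 < 2 / (lam + mu)) by (apply Rdiv_lt_0_compat; lra).
  assert (HK : 0 <= K) by (unfold K; apply Rmult_le_pos; [apply sqrt_pos | lra]).
  set (C := K * (2 + 1 / mu + 2 / (lam + mu)) + 1).
  assert (D1 : C - 2 * K = K * (1 / mu + 2 / (lam + mu)) + 1) by (unfold C; ring).
  assert (D2 : C * mu - K = K * (2 * mu + 2 * mu / (lam + mu)) + mu) by (unfold C; field; lra).
  assert (D3 : C * (lam + mu) - 2 * K = K * (2 + 1 / mu) * (lam + mu) + (lam + mu))
    by (unfold C; field; lra).
  assert (P1 : 0 <= C - 2 * K) by (rewrite D1; pose proof (Rmult_le_pos K (1 / mu + 2 / (lam + mu))); lra).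
  assert (P2 : 0 <= C * mu - K).
  { rewrite D2. assert (0 <= 2 * mu / (lam + mu)) by (apply Rdiv_le_0_compat; lra).
    pose proof (Rmult_le_pos K (2 * mu + 2 * mu / (lam + mu))). lra. }
  assert (P3 : 0 <= C * (lam + mu) - 2 * K).
  { rewrite D3. pose proof (Rmult_le_pos (K * (2 + 1 / mu)) (lam + mu)).
    pose proof (Rmult_le_pos K (2 + 1 / mu)). lra. }
  pose proof (Rmult_le_pos _ _ P1 HQ). pose proof (Rmult_le_pos _ _ P2 HQ).
  pose proof (Rmult_le_pos _ _ P3 HQ). pose proof (Rmult_le_pos K (2 + 1 / mu + 2 / (lam + mu))).
  repeat split; [unfold C|..]; nra.
Qed.

Theorem theorem4p3 :
  forall (a b lam mu C0 : R),
    0 < a -> 0 < b -> 0 < lam -> 0 < mu -> 0 < C0 ->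
  exists C delta : R, 0 < C /\ 0 < delta /\
  forall (nx ny : nat) (x y : nat -> R),
    is_grid nx x a -> is_grid ny y b ->
    (forall i, (i < nx)%nat -> hh x i >= C0 * Rmax (hmax nx x) (hmax ny y)) ->
    (forall j, (j < ny)%nat -> hh y j >= C0 * Rmax (hmax nx x) (hmax ny y)) ->
    hmax nx x < delta -> hmax ny y < delta ->
  forall (ux uy s11 s12 s22 fx fy : R -> R -> R),
    smooth2 ux -> smooth2 uy -> smooth2 s11 -> smooth2 s12 -> smooth2 s22 ->
    elasticity_solution a b lam mu ux uy s11 s12 s22 fx fy ->
  forall (Mu Ms : R),
    W3inf_bound a b ux Mu -> W3inf_bound a b uy Mu ->
    W3inf_bound a b s11 Ms -> W3inf_bound a b s12 Ms -> W3inf_bound a b s22 Ms ->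
  forall (Wx Wy Z11 Z22 Z12 : nat -> nat -> R),
    MACE_solution nx ny x y lam mu fx fy Wx Wy Z11 Z22 Z12 ->
  let h := hmax nx x in
  let l := hmax ny y in
  normTM nx ny x y (fun K M => Wx K M - tux x y ux K M)
    + normMT nx ny x y (fun K M => Wy K M - tuy x y uy K M)
    <= C * (h ^ 2 + l ^ 2) * (Mu + Ms) /\
  normT nx ny x y (fun K M => Z12 K M - tsig12 x y s12 K M)
    <= C * mu * (h ^ 2 + l ^ 2) * (Mu + Ms) /\
  normM nx ny x y (fun K M => Z11 K M - tsig_kk x y s11 K M)
    + normM nx ny x y (fun K M => Z22 K M - tsig_kk x y s22 K M)
    <= C * (lam + mu) * (h ^ 2 + l ^ 2) * (Mu + Ms).
Proof.
  intros a b lam mu C0 Ha Hb Hlam Hmu _.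
  exists (error_const a b lam mu), 1.
  destruct (error_const_spec a b lam mu 0 Hlam Hmu (Rle_refl 0)) as [HC _].
  split; [exact HC | split; [lra|]].
  intros nx ny x y Gx Gy _ _ _ _ ux uy s11 s12 s22 fx fy Su Sv S11 S12 S22 EL
         Mu Ms Bu Bv B11 B12 B22 Wx Wy Z11 Z22 Z12 MS h l.
  destruct (scheme_error_estimate a b lam mu nx ny x y Ha Hb Hlam Hmu Gx Gy
              ux uy s11 s12 s22 fx fy Su Sv S11 S12 S22 EL Mu Ms Bu Bv B11 B12 B22
              Wx Wy Z11 Z22 Z12 MS) as [N1 [N2 [N3 [N4 N5]]]].
  fold h l in N1, N2, N3, N4, N5.
  set (Q := (h ^ 2 + l ^ 2) * (Mu + Ms)) in N1, N2, N3, N4, N5.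
  assert (HQ : 0 <= Q).
  { unfold Q. pose proof (W3inf_bound_ge0 a b ux Mu Ha Hb Bu).
    pose proof (W3inf_bound_ge0 a b s11 Ms Ha Hb B11). pose proof (pow2_ge_0 h). pose proof (pow2_ge_0 l). nra. }
  destruct (error_const_spec a b lam mu Q Hlam Hmu HQ) as [_ [E1 [E2 E3]]].
  set (C := error_const a b lam mu) in *.
  replace (C * (h ^ 2 + l ^ 2) * (Mu + Ms)) with (C * Q) by (unfold Q; ring).
  replace (C * mu * (h ^ 2 + l ^ 2) * (Mu + Ms)) with (C * mu * Q) by (unfold Q; ring).
  replace (C * (lam + mu) * (h ^ 2 + l ^ 2) * (Mu + Ms)) with (C * (lam + mu) * Q) by (unfold Q; ring).
  repeat split; lra.
Qed.
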